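(* Let $d\in\{2,3\}$ and let $(W_n)$ be the simple symmetric random walk on $\mathbb{Z}^d$ started at $0$ (each of the $2d$ neighbours chosen with probability $1/(2d)$), and $X_n=n^{-1/4}W_n$. For $t\in\mathbb{R}^d$ set $\psi_n(t)=\mathbb{E}[e^{\langle t,X_n\rangle}]\exp\!\big(-\tfrac{n^{1/2}\|t\|^2}{2d}\big)$. Then $\psi_n\to\psi$ locally uniformly on $\mathbb{R}^d$ and in $L^1(\mathbb{R}^d)$, and $\psi\in L^1(\mathbb{R}^d)$, where $$\psi(t_1,t_2)=\exp\!\Big(-\frac{t_1^4+t_2^4+6t_1^2t_2^2}{96}\Big)\ (d=2),\qquad \psi(t_1,t_2,t_3)=\exp\!\Big(-\frac{t_1^2t_2^2+t_1^2t_3^2+t_2^2t_3^2}{36}\Big)\ (d=3).$$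
   Context: $\langle u,v\rangle=\sum_i u_iv_i$ and $\|\cdot\|$ is the Euclidean norm on $\mathbb{R}^d$. *)

From Stdlib Require Import Reals List Arith.
Import ListNotations.
Open Scope R_scope.

(* Vectors of R^d are represented as functions nat -> R; only the
   coordinates 0..d-1 are meaningful. *)
Definition rsum (l : list R) : R := fold_right Rplus 0 l.

Definition inner (d : nat) (u v : nat -> R) : R :=
  rsum (map (fun i => u i * v i) (seq 0 d)).

Definition norm2 (d : nat) (u : nat -> R) : R := inner d u u.

(* Steps of the simple random walk on Z^d: step k (k < 2d) moves coordinate
   k/2 by +1 if k is even and by -1 if k is odd. A path of length n is a list
   of n step indices; all (2d)^n paths are equally likely. *)
Fixpoint paths (d n : nat) : list (list nat) :=
  match n with
  | O => [ [] ]
  | S m => flat_map (fun p => map (fun k => k :: p) (seq 0 (2 * d))) (paths d m)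
  end.

Definition step_coord (k i : nat) : R :=
  if Nat.eqb (Nat.div k 2) i then (if Nat.even k then 1 else -1) else 0.

Definition walk_pos (p : list nat) (i : nat) : R :=
  rsum (map (fun k => step_coord k i) p).

Definition Xn (n : nat) (p : list nat) (i : nat) : R :=
  walk_pos p i / Rpower (INR n) (1/4).

(* E[exp <t, X_n>] : uniform average over all (2d)^n paths *)
Definition mgf (d n : nat) (t : nat -> R) : R :=
  / (INR (2 * d)) ^ n * rsum (map (fun p => exp (inner d t (Xn n p))) (paths d n)).

Definition psi_n (d n : nat) (t : nat -> R) : R :=
  mgf d n t * exp (- (sqrt (INR n) * norm2 d t) / (2 * INR d)).

Definition psi (d : nat) (t : nat -> R) : R :=
  if Nat.eqb d 2 then
    exp (- (t 0%nat ^ 4 + t 1%nat ^ 4 + 6 * t 0%nat ^ 2 * t 1%nat ^ 2) / 96)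
  else
    exp (- (t 0%nat ^ 2 * t 1%nat ^ 2 + t 0%nat ^ 2 * t 2%nat ^ 2
            + t 1%nat ^ 2 * t 2%nat ^ 2) / 36).

Definition is_RInt (g : R -> R) (a b l : R) : Prop :=
  exists pr : Riemann_integrable g a b, RiemannInt pr = l.

Definition upd (v : nat -> R) (k : nat) (x : R) : nat -> R :=
  fun i => if Nat.eqb i k then x else v i.

Fixpoint box_int (k : nat) (f : (nat -> R) -> R) (r l : R) : Prop :=
  match k with
  | O => l = f (fun _ => 0)
  | S k' => exists g : R -> R,
      (forall x, box_int k' (fun v => f (upd v k' x)) r (g x)) /\
      is_RInt g (- r) r l
  end.

(* For continuous g: integral over R^d of |g| exists (is finite) and is <= c,
   i.e. the integrals of |g| over all boxes [-r,r]^d exist and are <= c. *)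
Definition L1_le (d : nat) (g : (nat -> R) -> R) (c : R) : Prop :=
  (forall r, 0 <= r -> exists l, box_int d (fun t => Rabs (g t)) r l) /\
  (forall r l, 0 <= r -> box_int d (fun t => Rabs (g t)) r l -> l <= c).

From Pilot Require Import Defs.
From Stdlib Require Import Reals List Arith Lra Lia FunctionalExtensionality Classical ClassicalEpsilon.
From Coquelicot Require Import Coquelicot.
Import ListNotations.
Open Scope R_scope.

(* Averaging over the (2d)^n paths factorises: with [s = t / n^(1/4)],
   [psi_n t = (A s * exp (- |s|^2 / (2d)))^n] where [A s] is the mean of the [cosh s_i].
   Comparing the Taylor series of [cosh] and [exp] gives [A s * exp (- |s|^2 / (2d))
   = exp (- q s) + O(|s|^6)] for a quartic form [q], and [n q s = q t]; raising to the
   n-th power yields [|psi_n t - psi t| <= C |t|^6 / sqrt n], hence locally uniform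
   convergence.  For the L^1 bound, the same step estimates show that where [|s|] is
   bounded both [psi_n t] and [psi t] are at most [exp (- q t / 3)], which is dominated by
   an integrable product of Lorentzians (in dimension 3 by [prod 1 / (1 + t_i^2 t_j^2)]),
   whose mass outside [[-M, M]^d] is [O(1/M)]; where [|s|] is large, one step factor is at
   most [39/40], so [psi_n] decays geometrically in [n]. *)

(** * The moment generating function of the walk *)

Lemma rsum_app (l1 l2 : list R) : rsum (l1 ++ l2) = rsum l1 + rsum l2.
Proof. induction l1 as [|x l1 IH]; simpl; [ring | rewrite IH; ring]. Qed.

Lemma rsum_map_add {A} (f g : A -> R) (l : list A) :
  rsum (map (fun x => f x + g x) l) = rsum (map f l) + rsum (map g l).
Proof. induction l as [|x l IH]; simpl; [ring | rewrite IH; ring]. Qed.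

Lemma rsum_map_mul_l {A} (a : R) (f : A -> R) (l : list A) :
  rsum (map (fun x => a * f x) l) = a * rsum (map f l).
Proof. induction l as [|x l IH]; simpl; [ring | rewrite IH; ring]. Qed.

Lemma rsum_map_ext {A} (f g : A -> R) (l : list A) :
  (forall x, f x = g x) -> rsum (map f l) = rsum (map g l).
Proof. intros H; induction l as [|x l IH]; simpl; [ring | rewrite IH, H; ring]. Qed.

Lemma rsum_map_flat_map {A B} (f : B -> R) (g : A -> list B) (l : list A) :
  rsum (map f (flat_map g l)) = rsum (map (fun a => rsum (map f (g a))) l).
Proof.
  induction l as [|a l IH]; simpl; [ring|]. rewrite map_app, rsum_app, IH; ring.
Qed.

Lemma inner_add_r (d : nat) (t u v : nat -> R) :
  inner d t (fun i => u i + v i) = inner d t u + inner d t v.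
Proof. unfold inner. rewrite <- rsum_map_add. apply rsum_map_ext; intros; ring. Qed.

Definition step_mgf (d : nat) (c : R) (t : nat -> R) : R :=
  rsum (map (fun k => exp (inner d t (fun i => step_coord k i / c))) (seq 0 (2 * d))).

Lemma rsum_paths_exp_inner (d : nat) (c : R) (t : nat -> R) (m : nat) :
  rsum (map (fun p => exp (inner d t (fun i => walk_pos p i / c))) (paths d m))
  = step_mgf d c t ^ m.
Proof.
  induction m as [|m IH].
  - simpl. replace (inner d t (fun i => walk_pos [] i / c)) with 0; [rewrite exp_0; ring|].
    unfold inner, walk_pos; simpl. induction (seq 0 d) as [|i l IHl]; simpl; [ring|].
    rewrite <- IHl. unfold Rdiv; ring.
  - simpl paths. rewrite rsum_map_flat_map, <- tech_pow_Rmult, <- IH, <- rsum_map_mul_l.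
    apply rsum_map_ext; intros p. rewrite map_map. unfold step_mgf.
    rewrite Rmult_comm, <- rsum_map_mul_l. apply rsum_map_ext; intros k.
    rewrite <- exp_plus, <- inner_add_r. do 2 f_equal.
    apply functional_extensionality; intros i. unfold walk_pos; simpl. unfold Rdiv; ring.
Qed.

Lemma mgf_eq_pow (d n : nat) (t : nat -> R) :
  mgf d n t = (/ INR (2 * d) * step_mgf d (Rpower (INR n) (1/4)) t) ^ n.
Proof.
  unfold mgf. rewrite Rpow_mult_distr, pow_inv. f_equal.
  exact (rsum_paths_exp_inner d (Rpower (INR n) (1/4)) t n).
Qed.

Lemma Rmult_one_div (x c : R) : x * (1 / c) = x / c.
Proof. unfold Rdiv. ring. Qed.

Lemma Rmult_opp_one_div (x c : R) : x * (-1 / c) = - (x / c).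
Proof. unfold Rdiv. ring. Qed.

Lemma step_mgf_2 (c : R) (t : nat -> R) :
  step_mgf 2 c t = 2 * (cosh (t 0%nat / c) + cosh (t 1%nat / c)).
Proof.
  unfold step_mgf, inner, step_coord, cosh; simpl.
  rewrite ?Rdiv_0_l, ?Rmult_0_r, ?Rplus_0_r, ?Rplus_0_l, ?Rmult_one_div, ?Rmult_opp_one_div.
  field.
Qed.

Lemma step_mgf_3 (c : R) (t : nat -> R) :
  step_mgf 3 c t = 2 * (cosh (t 0%nat / c) + cosh (t 1%nat / c) + cosh (t 2%nat / c)).
Proof.
  unfold step_mgf, inner, step_coord, cosh; simpl.
  rewrite ?Rdiv_0_l, ?Rmult_0_r, ?Rplus_0_r, ?Rplus_0_l, ?Rmult_one_div, ?Rmult_opp_one_div.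
  field.
Qed.

(** * Taylor bounds for [exp] and [cosh] *)

Definition exp_tail (u : R) : R := exp u - 1 - u - u ^ 2 / 2.

Lemma Un_cv_const (c : R) : Un_cv (fun _ => c) c.
Proof. intros eps Heps. exists 0%nat. intros. unfold R_dist. rewrite Rminus_diag, Rabs_R0. lra. Qed.

Lemma Un_cv_ext (u v : nat -> R) (l : R) : (forall n, u n = v n) -> Un_cv u l -> Un_cv v l.
Proof. intros H Hu eps Heps. destruct (Hu eps Heps) as [N HN]. exists N. intros. rewrite <- H. auto. Qed.

Lemma Un_cv_subseq (u : nat -> R) (l : R) (g : nat -> nat) :
  (forall n, (n <= g n)%nat) -> Un_cv u l -> Un_cv (fun n => u (g n)) l.
Proof.
  intros Hg Hu eps Heps. destruct (Hu eps Heps) as [N HN].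
  exists N. intros n Hn. apply HN. specialize (Hg n). lia.
Qed.

Lemma Un_cv_ge_const (u : nat -> R) (c l : R) : (forall n, c <= u n) -> Un_cv u l -> c <= l.
Proof. intros H Hu. eapply Rle_cv_lim; [exact H | apply Un_cv_const | exact Hu]. Qed.

Lemma sum_f_R0_shift3 (f : nat -> R) (m : nat) :
  sum_f_R0 f (m + 3) = f 0%nat + f 1%nat + f 2%nat + sum_f_R0 (fun j => f (j + 3)%nat) m.
Proof.
  induction m as [|m IH]; [simpl; ring|].
  replace (S m + 3)%nat with (S (m + 3)) by lia. rewrite !tech5, IH.
  replace (S m + 3)%nat with (S (m + 3)) by lia. ring.
Qed.

Lemma Un_cv_series_drop3 (f : nat -> R) (L : R) : Un_cv (fun n => sum_f_R0 f n) L ->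
  Un_cv (fun m => sum_f_R0 (fun j => f (j + 3)%nat) m) (L - f 0%nat - f 1%nat - f 2%nat).
Proof.
  intros H.
  assert (Hd := CV_minus _ _ _ _ (CV_shift' _ 3 _ H) (Un_cv_const (f 0%nat + f 1%nat + f 2%nat))).
  replace (L - f 0%nat - f 1%nat - f 2%nat) with (L - (f 0%nat + f 1%nat + f 2%nat)) by ring.
  eapply Un_cv_ext; [|exact Hd]. intros n. simpl. rewrite sum_f_R0_shift3. ring.
Qed.

Lemma exp_tail_series (u : R) :
  Un_cv (fun m => sum_f_R0 (fun j => / INR (fact (j + 3)) * u ^ (j + 3)) m) (exp_tail u).
Proof.
  replace (exp_tail u) with
    (exp u - / INR (fact 0) * u ^ 0 - / INR (fact 1) * u ^ 1 - / INR (fact 2) * u ^ 2)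
    by (unfold exp_tail; simpl; field).
  exact (Un_cv_series_drop3 _ _ (E1_cvg u)).
Qed.

Lemma pow_opp (x : R) (n : nat) : (- x) ^ n = (if Nat.even n then 1 else -1) * x ^ n.
Proof.
  induction n as [|n IH]; [simpl; ring|].
  simpl pow. rewrite IH, Nat.even_succ, <- Nat.negb_even. destruct (Nat.even n); simpl; ring.
Qed.

Lemma cosh_partial_sum (x : R) (m : nat) :
  (E1 x (2 * m + 1) + E1 (- x) (2 * m + 1)) / 2
  = sum_f_R0 (fun j => / INR (fact (2 * j)) * (x ^ 2) ^ j) m.
Proof.
  unfold E1. induction m as [|m IH]; [simpl; field|].
  replace (2 * S m + 1)%nat with (S (S (2 * m + 1))) by lia.
  rewrite !tech5, <- IH, !pow_opp.
  replace (Nat.even (S (2 * m + 1))) with true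
    by (replace (S (2 * m + 1)) with (0 + 2 * (m + 1))%nat by lia; now rewrite Nat.even_add_mul_2).
  replace (Nat.even (S (S (2 * m + 1)))) with false
    by (replace (S (S (2 * m + 1))) with (1 + 2 * (m + 1))%nat by lia; now rewrite Nat.even_add_mul_2).
  replace (S (2 * m + 1)) with (2 * S m)%nat by lia. rewrite pow_mult.
  field. split; apply not_0_INR, fact_neq_0.
Qed.

Lemma cosh_series (x : R) :
  Un_cv (fun m => sum_f_R0 (fun j => / INR (fact (2 * j)) * (x ^ 2) ^ j) m) (cosh x).
Proof.
  assert (H := CV_mult _ _ _ _ (CV_plus _ _ _ _ (E1_cvg x) (E1_cvg (- x))) (Un_cv_const (/ 2))).
  assert (Hs := Un_cv_subseq _ _ (fun m => 2 * m + 1)%nat ltac:(intros; cbv beta; lia) H).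
  unfold cosh. replace ((exp x + exp (- x)) / 2) with ((exp x + exp (- x)) * / 2) by (unfold Rdiv; ring).
  eapply Un_cv_ext; [|exact Hs]. intros n. cbv beta. rewrite <- cosh_partial_sum. reflexivity.
Qed.

Lemma sum_f_R0_nonneg (f : nat -> R) (m : nat) : (forall j, 0 <= f j) -> 0 <= sum_f_R0 f m.
Proof. intros H. induction m as [|m IH]; simpl; [apply H|]. specialize (H (S m)). lra. Qed.

Lemma inv_fact_pos (j : nat) : 0 < / INR (fact j).
Proof. apply Rinv_0_lt_compat, lt_0_INR, lt_O_fact. Qed.

Lemma cosh_ge_taylor4 (x : R) : 1 + x ^ 2 / 2 + x ^ 4 / 24 <= cosh x.
Proof.
  set (f := fun j => / INR (fact (2 * j)) * (x ^ 2) ^ j).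
  assert (Hf : forall j, 0 <= f j)
    by (intros j; apply Rmult_le_pos; [left; apply inv_fact_pos | apply pow_le, pow2_ge_0]).
  assert (H := Un_cv_ge_const _ 0 _ (fun m => sum_f_R0_nonneg _ m (fun j => Hf (j + 3)%nat))
                 (Un_cv_series_drop3 _ _ (cosh_series x))).
  unfold f in H; simpl in H. lra.
Qed.

Lemma exp_tail_ge_cube (u : R) : 0 <= u -> u ^ 3 / 6 <= exp_tail u.
Proof.
  intros Hu. eapply Un_cv_ge_const; [|apply exp_tail_series]. intros n. cbv beta.
  induction n as [|n IH]; [simpl; lra|].
  rewrite tech5. assert (0 <= / INR (fact (S n + 3)) * u ^ (S n + 3))
    by (apply Rmult_le_pos; [left; apply inv_fact_pos | apply pow_le; auto]).
  lra.
Qed.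

Lemma exp_tail_nonneg (u : R) : 0 <= u -> 0 <= exp_tail u.
Proof. intros Hu. pose proof (exp_tail_ge_cube u Hu). pose proof (pow_le u 3 Hu). lra. Qed.

Lemma pow_add_le_pow_add (a b : R) (k : nat) : 0 <= a -> 0 <= b -> (1 <= k)%nat ->
  a ^ k + b ^ k <= (a + b) ^ k.
Proof.
  intros Ha Hb Hk. induction k as [|k IH]; [lia|]. destruct k as [|k]; [simpl; lra|].
  specialize (IH ltac:(lia)). rewrite <- !(tech_pow_Rmult _ (S k)).
  pose proof (pow_le a (S k) Ha). pose proof (pow_le b (S k) Hb).
  assert ((a + b) * (a ^ S k + b ^ S k) <= (a + b) * (a + b) ^ S k)
    by (apply Rmult_le_compat_l; lra).
  nra.
Qed.

Lemma exp_tail_superadditive (a b : R) : 0 <= a -> 0 <= b ->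
  exp_tail a + exp_tail b <= exp_tail (a + b).
Proof.
  intros Ha Hb.
  eapply Rle_cv_lim; [|exact (CV_plus _ _ _ _ (exp_tail_series a) (exp_tail_series b))
                      | exact (exp_tail_series (a + b))].
  intros n. cbv beta. rewrite <- plus_sum. apply sum_Rle. intros j _.
  rewrite <- Rmult_plus_distr_l. apply Rmult_le_compat_l; [left; apply inv_fact_pos|].
  apply pow_add_le_pow_add; auto; lia.
Qed.

Lemma exp_tail_le (u : R) : 0 <= u -> exp_tail u <= u ^ 3 / 6 * exp u.
Proof.
  intros Hu.
  eapply Rle_cv_lim; [|exact (exp_tail_series u)
                      | exact (CV_mult _ _ _ _ (Un_cv_const (u ^ 3 / 6)) (E1_cvg u))].
  intros n. cbv beta. unfold E1. rewrite scal_sum. apply sum_Rle. intros j _.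
  assert (Hf : 6 * INR (fact j) <= INR (fact (j + 3))).
  { replace 6 with (INR 6) by (simpl; ring). rewrite <- mult_INR. apply le_INR.
    replace (j + 3)%nat with (S (S (S j))) by lia. rewrite !fact_simpl. nia. }
  pose proof (lt_0_INR _ (lt_O_fact j)). pose proof (pow_le u j Hu). pose proof (pow_le u 3 Hu).
  rewrite pow_add.
  replace (/ INR (fact j) * u ^ j * (u ^ 3 / 6)) with (u ^ j * u ^ 3 * / (6 * INR (fact j)))
    by (field; lra).
  rewrite Rmult_comm. apply Rmult_le_compat_l; [nra|]. apply Rinv_le_contravar; lra.
Qed.

Lemma fact_double_ratio (d j : nat) : (1 <= d <= 3)%nat ->
  (5 * ((2 * d) ^ (j + 3) * fact (j + 3)) <= 3 * d * fact (2 * (j + 3)))%nat.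
Proof.
  intros Hd. induction j as [|j IH].
  - assert (d = 1 \/ d = 2 \/ d = 3)%nat as [-> | [-> | ->]] by lia; simpl; lia.
  - replace (S j + 3)%nat with (S (j + 3)) by lia.
    replace (2 * S (j + 3))%nat with (S (S (2 * (j + 3)))) by lia.
    rewrite Nat.pow_succ_r', !fact_simpl.
    set (A := ((2 * d) ^ (j + 3) * fact (j + 3))%nat) in *.
    set (B := fact (2 * (j + 3))) in *.
    replace (5 * (2 * d * (2 * d) ^ (j + 3) * (S (j + 3) * fact (j + 3))))%nat
      with (2 * d * S (j + 3) * (5 * A))%nat by (unfold A; ring).
    replace (3 * d * (S (S (2 * (j + 3))) * (S (2 * (j + 3)) * B)))%nat
      with (S (S (2 * (j + 3))) * S (2 * (j + 3)) * (3 * d * B))%nat by ring.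
    apply Nat.mul_le_mono; [nia | exact IH].
Qed.

Lemma cosh_term_le_exp_tail_term (d k : nat) (w : R) : (1 <= d <= 3)%nat -> (3 <= k)%nat -> 0 <= w ->
  / INR (fact (2 * k)) * w ^ k <= / INR (fact k) * (w / (2 * INR d)) ^ k * (3 / 5 * INR d).
Proof.
  intros Hd Hk Hw. assert (Hd0 : 1 <= INR d) by (apply (le_INR 1); lia).
  replace k with (k - 3 + 3)%nat in * by lia. set (j := (k - 3)%nat).
  assert (Hr := le_INR _ _ (fact_double_ratio d j Hd)).
  rewrite !mult_INR, pow_INR, mult_INR in Hr.
  replace (INR 5) with 5 in Hr by (simpl; ring). replace (INR 3) with 3 in Hr by (simpl; ring).
  replace (INR 2) with 2 in Hr by (simpl; ring).
  set (m := (j + 3)%nat) in *.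
  pose proof (lt_0_INR _ (lt_O_fact m)). pose proof (lt_0_INR _ (lt_O_fact (2 * m))).
  assert (0 < (2 * INR d) ^ m) by (apply pow_lt; lra). pose proof (pow_le w m Hw).
  replace ((w / (2 * INR d)) ^ m) with (w ^ m * / (2 * INR d) ^ m)
    by (unfold Rdiv; rewrite (Rpow_mult_distr w), pow_inv; auto).
  replace (/ INR (fact m) * (w ^ m * / (2 * INR d) ^ m) * (3 / 5 * INR d))
    with (w ^ m * (3 * INR d / (5 * ((2 * INR d) ^ m * INR (fact m))))) by (field; lra).
  replace (/ INR (fact (2 * m)) * w ^ m) with (w ^ m * / INR (fact (2 * m))) by ring.
  apply Rmult_le_compat_l; auto.
  apply (Rmult_le_reg_r (5 * ((2 * INR d) ^ m * INR (fact m)) * INR (fact (2 * m)))).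
  { repeat apply Rmult_lt_0_compat; lra. }
  replace (/ INR (fact (2 * m)) * (5 * ((2 * INR d) ^ m * INR (fact m)) * INR (fact (2 * m))))
    with (5 * ((2 * INR d) ^ m * INR (fact m))) by (field; lra).
  replace (3 * INR d / (5 * ((2 * INR d) ^ m * INR (fact m)))
           * (5 * ((2 * INR d) ^ m * INR (fact m)) * INR (fact (2 * m))))
    with (3 * INR d * INR (fact (2 * m))) by (field; lra).
  exact Hr.
Qed.

Lemma cosh_le_taylor4_exp_tail (d : nat) (x : R) : (1 <= d <= 3)%nat ->
  cosh x <= 1 + x ^ 2 / 2 + x ^ 4 / 24 + 3 / 5 * INR d * exp_tail (x ^ 2 / (2 * INR d)).
Proof.
  intros Hd. set (w := x ^ 2). assert (Hw : 0 <= w) by apply pow2_ge_0.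
  assert (Htail := Un_cv_series_drop3 _ _ (cosh_series x)). fold w in Htail.
  assert (H := CV_mult _ _ _ _ (Un_cv_const (3 / 5 * INR d)) (exp_tail_series (w / (2 * INR d)))).
  enough (cosh x - / INR (fact (2 * 0)) * w ^ 0 - / INR (fact (2 * 1)) * w ^ 1
          - / INR (fact (2 * 2)) * w ^ 2 <= 3 / 5 * INR d * exp_tail (w / (2 * INR d))).
  { replace (x ^ 4) with (w ^ 2) by (unfold w; ring). simpl in H0. lra. }
  eapply Rle_cv_lim; [|exact Htail|exact H].
  intros n. cbv beta. rewrite scal_sum. apply sum_Rle. intros j _.
  apply cosh_term_le_exp_tail_term; auto; lia.
Qed.

(** * One step of the walk versus the limiting Gaussian factor *)

Lemma exp_le_exp_of_le (x y : R) : x <= y -> exp x <= exp y.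
Proof. intros H. destruct (Req_dec x y) as [->|]; [lra | left; apply exp_increasing; lra]. Qed.

Lemma exp_le_1 (x : R) : x <= 0 -> exp x <= 1.
Proof. intros H. rewrite <- exp_0. now apply exp_le_exp_of_le. Qed.

Lemma exp_mul_exp_opp (x : R) : exp x * exp (- x) = 1.
Proof. rewrite <- exp_plus, Rplus_opp_r, exp_0. reflexivity. Qed.

Lemma exp_ge_taylor2 (v : R) : 0 <= v -> 1 + v + v ^ 2 / 2 <= exp v.
Proof. intros Hv. pose proof (exp_tail_nonneg v Hv). unfold exp_tail in *. lra. Qed.

Lemma exp_tail_mul_exp_opp_ge (u : R) : 1 <= u -> 1 / 16 <= exp_tail u * exp (- u).
Proof.
  intros Hu. unfold exp_tail.
  assert (He : 8 / 3 <= exp 1) by (pose proof (exp_tail_ge_cube 1 ltac:(lra)); unfold exp_tail in *; lra).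
  pose proof (exp_ge_taylor2 (u - 1) ltac:(lra)).
  assert (Heu : exp u = exp 1 * exp (u - 1)) by (rewrite <- exp_plus; f_equal; ring).
  pose proof (exp_mul_exp_opp u). pose proof (exp_pos (- u)). pose proof (exp_pos (u - 1)).
  assert (1 + u + u ^ 2 / 2 <= 15 / 16 * exp u).
  { rewrite Heu. assert (1 + u + u ^ 2 / 2 <= 5 / 2 * (1 + (u - 1) + (u - 1) ^ 2 / 2)) by nra.
    nra. }
  nra.
Qed.

(* [A] is the one-step average of [cosh] at a rescaled point [s], [u = |s|^2 / (2d)] and
   [q] the quartic correction.  The coefficient [2/5] in the upper bound is what is left of
   [exp_tail u] after absorbing the error [3/5 * exp_tail u] of the cosh bounds. *)
Definition step_bounds (A u q : R) : Prop :=
  0 <= u /\ 0 <= q /\ q <= u ^ 2 / 2 /\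
  1 + u + u ^ 2 / 2 - q <= A /\ A <= exp u - q - 2 / 5 * exp_tail u.

Section StepRatio.

Variables A u q : R.
Hypothesis Hstep : step_bounds A u q.

Lemma step_ratio_upper : A * exp (- u) <= 1 - q * exp (- u) - 2 / 5 * exp_tail u * exp (- u).
Proof.
  destruct Hstep as (_ & _ & _ & _ & Hup).
  pose proof (exp_mul_exp_opp u). pose proof (exp_pos (- u)). nra.
Qed.

Lemma step_ratio_pos_le_1 : 0 < A * exp (- u) <= 1.
Proof.
  pose proof step_ratio_upper as Hr. destruct Hstep as (Hu & Hq & Hqu & Hlow & _).
  pose proof (exp_tail_nonneg u Hu). pose proof (exp_pos (- u)).
  split; [apply Rmult_lt_0_compat; nra | nra].
Qed.

Lemma step_ratio_close : u <= 1 -> Rabs (A * exp (- u) - exp (- q)) <= u ^ 3.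
Proof.
  intros Hu1. pose proof step_ratio_upper as Hr. destruct Hstep as (Hu & Hq & Hqu & Hlow & _).
  pose proof (exp_tail_nonneg u Hu). pose proof (exp_mul_exp_opp u). pose proof (exp_pos (- u)).
  assert (B1 : 1 - q <= exp (- q)) by (pose proof (exp_ineq1_le (- q)); lra).
  assert (B2 : exp (- q) <= 1 - q + q ^ 2).
  { pose proof (exp_ineq1_le q). pose proof (exp_mul_exp_opp q). pose proof (exp_pos (- q)).
    assert (exp (- q) * (1 + q) <= 1) by nra.
    assert ((1 - q + q ^ 2) * (1 + q) = 1 + q ^ 3) by ring.
    pose proof (pow_le q 3 Hq). nra. }
  assert (B3 : 1 - u <= exp (- u)) by (pose proof (exp_ineq1_le (- u)); lra).
  assert (B4 : 1 - u ^ 3 / 6 <= (1 + u + u ^ 2 / 2) * exp (- u)).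
  { pose proof (exp_tail_le u Hu). unfold exp_tail in *. nra. }
  assert (q ^ 2 <= u ^ 4 / 4) by nra.
  pose proof (pow_le u 3 Hu).
  assert (u ^ 4 <= u ^ 3) by (replace (u ^ 4) with (u ^ 3 * u) by ring; nra).
  assert (exp (- u) <= 1) by (apply exp_le_1; lra).
  apply Rabs_le. split; nra.
Qed.

Lemma step_ratio_le_exp_quart : u <= 1 -> A * exp (- u) <= exp (- q / 3).
Proof.
  intros Hu1. pose proof step_ratio_upper. destruct Hstep as (Hu & Hq & _).
  pose proof (exp_tail_nonneg u Hu). pose proof (exp_pos (- u)).
  assert (1 / 3 <= exp (- u)).
  { assert (exp u <= 3) by (pose proof exp_le_3; pose proof (exp_le_exp_of_le u 1 Hu1); lra).
    pose proof (exp_mul_exp_opp u). nra. }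
  pose proof (exp_ineq1_le (- q / 3)). nra.
Qed.

Lemma step_ratio_tail : 1 <= u -> A * exp (- u) <= 39 / 40.
Proof.
  intros Hu1. pose proof step_ratio_upper. destruct Hstep as (_ & Hq & _).
  pose proof (exp_tail_mul_exp_opp_ge u Hu1). pose proof (exp_pos (- u)). nra.
Qed.

End StepRatio.

(* [quart] is [quad ^ 2 / 2 - (sum_i s_i ^ 4) / (24 d)]: the quartic term by which the
   average of [cosh s_i] falls short of [exp quad]. *)
Definition cosh_avg2 (s0 s1 : R) : R := (cosh s0 + cosh s1) / 2.
Definition quad2 (s0 s1 : R) : R := (s0 ^ 2 + s1 ^ 2) / 4.
Definition quart2 (s0 s1 : R) : R := (s0 ^ 4 + s1 ^ 4 + 6 * s0 ^ 2 * s1 ^ 2) / 96.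

Definition cosh_avg3 (s0 s1 s2 : R) : R := (cosh s0 + cosh s1 + cosh s2) / 3.
Definition quad3 (s0 s1 s2 : R) : R := (s0 ^ 2 + s1 ^ 2 + s2 ^ 2) / 6.
Definition quart3 (s0 s1 s2 : R) : R := (s0 ^ 2 * s1 ^ 2 + s0 ^ 2 * s2 ^ 2 + s1 ^ 2 * s2 ^ 2) / 36.

Lemma quart2_nonneg (s0 s1 : R) : 0 <= quart2 s0 s1.
Proof. unfold quart2. assert (0 <= s0 ^ 2 * s1 ^ 2) by nra. nra. Qed.

Lemma quart3_nonneg (s0 s1 s2 : R) : 0 <= quart3 s0 s1 s2.
Proof.
  unfold quart3. assert (0 <= s0 ^ 2 * s1 ^ 2) by nra. assert (0 <= s0 ^ 2 * s2 ^ 2) by nra.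
  assert (0 <= s1 ^ 2 * s2 ^ 2) by nra. nra.
Qed.

Lemma step_bounds_2 (s0 s1 : R) : step_bounds (cosh_avg2 s0 s1) (quad2 s0 s1) (quart2 s0 s1).
Proof.
  pose proof (cosh_ge_taylor4 s0). pose proof (cosh_ge_taylor4 s1).
  pose proof (cosh_le_taylor4_exp_tail 2 s0 ltac:(lia)).
  pose proof (cosh_le_taylor4_exp_tail 2 s1 ltac:(lia)).
  pose proof (exp_tail_superadditive (s0 ^ 2 / 4) (s1 ^ 2 / 4) ltac:(nra) ltac:(nra)).
  pose proof (quart2_nonneg s0 s1).
  replace (s0 ^ 2 / 4 + s1 ^ 2 / 4) with (quad2 s0 s1) in * by (unfold quad2; field).
  simpl INR in *. replace (2 * (1 + 1)) with 4 in * by ring.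
  assert (exp (quad2 s0 s1) = exp_tail (quad2 s0 s1) + 1 + quad2 s0 s1 + quad2 s0 s1 ^ 2 / 2)
    by (unfold exp_tail; ring).
  unfold step_bounds, cosh_avg2, quad2, quart2 in *. repeat split; nra.
Qed.

Lemma step_bounds_3 (s0 s1 s2 : R) :
  step_bounds (cosh_avg3 s0 s1 s2) (quad3 s0 s1 s2) (quart3 s0 s1 s2).
Proof.
  pose proof (cosh_ge_taylor4 s0). pose proof (cosh_ge_taylor4 s1). pose proof (cosh_ge_taylor4 s2).
  pose proof (cosh_le_taylor4_exp_tail 3 s0 ltac:(lia)).
  pose proof (cosh_le_taylor4_exp_tail 3 s1 ltac:(lia)).
  pose proof (cosh_le_taylor4_exp_tail 3 s2 ltac:(lia)).
  pose proof (exp_tail_superadditive (s0 ^ 2 / 6) (s1 ^ 2 / 6) ltac:(nra) ltac:(nra)).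
  pose proof (exp_tail_superadditive (s0 ^ 2 / 6 + s1 ^ 2 / 6) (s2 ^ 2 / 6) ltac:(nra) ltac:(nra)).
  pose proof (quart3_nonneg s0 s1 s2).
  replace (s0 ^ 2 / 6 + s1 ^ 2 / 6 + s2 ^ 2 / 6) with (quad3 s0 s1 s2) in * by (unfold quad3; field).
  simpl INR in *. replace (2 * (1 + 1 + 1)) with 6 in * by ring.
  assert (exp (quad3 s0 s1 s2) = exp_tail (quad3 s0 s1 s2) + 1 + quad3 s0 s1 s2 + quad3 s0 s1 s2 ^ 2 / 2)
    by (unfold exp_tail; ring).
  unfold step_bounds, cosh_avg3, quad3, quart3 in *. repeat split; nra.
Qed.

Definition walk_scale (n : nat) : R := Rpower (INR n) (1 / 4).

Lemma walk_scale_pos (n : nat) : 0 < walk_scale n.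
Proof. apply exp_pos. Qed.

Lemma walk_scale_pow (n k : nat) : (1 <= n)%nat ->
  walk_scale n ^ k = Rpower (INR n) (INR k / 4).
Proof.
  intros Hn. unfold walk_scale. rewrite <- Rpower_pow by apply exp_pos.
  rewrite Rpower_mult. f_equal. field.
Qed.

Lemma walk_scale_sq (n : nat) : (1 <= n)%nat -> walk_scale n ^ 2 = sqrt (INR n).
Proof.
  intros Hn. rewrite walk_scale_pow by auto. rewrite <- Rpower_sqrt by (apply lt_0_INR; lia).
  f_equal. simpl. field.
Qed.

Lemma walk_scale_pow4 (n : nat) : (1 <= n)%nat -> walk_scale n ^ 4 = INR n.
Proof.
  intros Hn. rewrite walk_scale_pow by auto. replace (INR 4 / 4) with 1 by (simpl; field).
  apply Rpower_1, lt_0_INR. lia.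
Qed.

Lemma sqrt_INR_facts (n : nat) : (1 <= n)%nat ->
  1 <= sqrt (INR n) /\ sqrt (INR n) * sqrt (INR n) = INR n.
Proof.
  intros Hn. assert (1 <= INR n) by (apply (le_INR 1); auto).
  split; [rewrite <- sqrt_1; apply sqrt_le_1_alt; lra | apply sqrt_sqrt; lra].
Qed.

Lemma exp_pow (x : R) (n : nat) : exp x ^ n = exp (INR n * x).
Proof.
  induction n as [|n IH]; [simpl; rewrite Rmult_0_l, exp_0; reflexivity|].
  rewrite S_INR. simpl pow. rewrite IH, <- exp_plus. f_equal. ring.
Qed.

Section Dimension2.

Variables (n : nat) (t : nat -> R).
Hypothesis Hn : (1 <= n)%nat.
Let s0 := t 0%nat / walk_scale n.
Let s1 := t 1%nat / walk_scale n.

Lemma psi_n_2_eq : psi_n 2 n t = (cosh_avg2 s0 s1 * exp (- quad2 s0 s1)) ^ n.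
Proof.
  unfold psi_n. rewrite mgf_eq_pow. fold (walk_scale n). rewrite step_mgf_2.
  rewrite (Rpow_mult_distr (cosh_avg2 _ _)), exp_pow. f_equal.
  - unfold cosh_avg2, s0, s1. apply (f_equal (fun x => x ^ n)). simpl. field.
  - f_equal. pose proof (walk_scale_pos n). destruct (sqrt_INR_facts n Hn).
    rewrite <- (walk_scale_sq n Hn). unfold norm2, inner, quad2, s0, s1. simpl.
    rewrite <- (walk_scale_pow4 n Hn). field. lra.
Qed.

Lemma psi_2_eq : psi 2 t = exp (- quart2 (t 0%nat) (t 1%nat)).
Proof. unfold psi, quart2. simpl. f_equal. field. Qed.

Lemma quart2_rescale : quart2 (t 0%nat) (t 1%nat) = INR n * quart2 s0 s1.
Proof.
  rewrite <- (walk_scale_pow4 n Hn). pose proof (walk_scale_pos n).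
  unfold quart2, s0, s1. field. lra.
Qed.

Lemma quad2_rescale : quad2 s0 s1 = (t 0%nat ^ 2 + t 1%nat ^ 2) / (4 * sqrt (INR n)).
Proof.
  rewrite <- (walk_scale_sq n Hn). pose proof (walk_scale_pos n).
  unfold quad2, s0, s1. field. lra.
Qed.

End Dimension2.

Section Dimension3.

Variables (n : nat) (t : nat -> R).
Hypothesis Hn : (1 <= n)%nat.
Let s0 := t 0%nat / walk_scale n.
Let s1 := t 1%nat / walk_scale n.
Let s2 := t 2%nat / walk_scale n.

Lemma psi_n_3_eq : psi_n 3 n t = (cosh_avg3 s0 s1 s2 * exp (- quad3 s0 s1 s2)) ^ n.
Proof.
  unfold psi_n. rewrite mgf_eq_pow. fold (walk_scale n). rewrite step_mgf_3.
  rewrite (Rpow_mult_distr (cosh_avg3 _ _ _)), exp_pow. f_equal.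
  - unfold cosh_avg3, s0, s1, s2. apply (f_equal (fun x => x ^ n)). simpl. field.
  - f_equal. pose proof (walk_scale_pos n). destruct (sqrt_INR_facts n Hn).
    rewrite <- (walk_scale_sq n Hn). unfold norm2, inner, quad3, s0, s1, s2. simpl.
    rewrite <- (walk_scale_pow4 n Hn). field. lra.
Qed.

Lemma psi_3_eq : psi 3 t = exp (- quart3 (t 0%nat) (t 1%nat) (t 2%nat)).
Proof. unfold psi, quart3. simpl. f_equal. field. Qed.

Lemma quart3_rescale : quart3 (t 0%nat) (t 1%nat) (t 2%nat) = INR n * quart3 s0 s1 s2.
Proof.
  rewrite <- (walk_scale_pow4 n Hn). pose proof (walk_scale_pos n).
  unfold quart3, s0, s1, s2. field. lra.
Qed.

Lemma quad3_rescale :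
  quad3 s0 s1 s2 = (t 0%nat ^ 2 + t 1%nat ^ 2 + t 2%nat ^ 2) / (6 * sqrt (INR n)).
Proof.
  rewrite <- (walk_scale_sq n Hn). pose proof (walk_scale_pos n).
  unfold quad3, s0, s1, s2. field. lra.
Qed.

End Dimension3.

Lemma pow_le_1 (y : R) (n : nat) : 0 <= y <= 1 -> y ^ n <= 1.
Proof. intros H. induction n as [|n IH]; simpl; [lra|]. pose proof (pow_le y n (proj1 H)). nra. Qed.

Lemma pow_sub_pow_abs_le (x y : R) (n : nat) : 0 <= x <= 1 -> 0 <= y <= 1 ->
  Rabs (x ^ n - y ^ n) <= INR n * Rabs (x - y).
Proof.
  intros Hx Hy. induction n as [|n IH]; [simpl; rewrite Rminus_diag, Rabs_R0; lra|].
  rewrite S_INR. simpl pow.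
  replace (x * x ^ n - y * y ^ n) with (x * (x ^ n - y ^ n) + y ^ n * (x - y)) by ring.
  eapply Rle_trans; [apply Rabs_triang|]. rewrite !Rabs_mult.
  assert (Rabs x <= 1) by (rewrite Rabs_pos_eq; lra).
  assert (Rabs (y ^ n) <= 1) by (rewrite Rabs_pos_eq by (apply pow_le; lra); apply pow_le_1; lra).
  pose proof (Rabs_pos (x ^ n - y ^ n)). pose proof (Rabs_pos (x - y)). nra.
Qed.

Lemma pow_le_geometric (x : R) (n : nat) : (1 <= n)%nat -> 0 <= x <= 39 / 40 ->
  x ^ n <= (39 / 40) ^ (n - 1) * x.
Proof.
  intros Hn H. destruct n as [|n]; [lia|]. replace (S n - 1)%nat with n by lia. simpl.
  rewrite Rmult_comm. apply Rmult_le_compat_r; [lra|]. apply pow_incr. lra.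
Qed.

Section RatioPow.

Variables (A u q : R) (n : nat).
Hypothesis Hstep : step_bounds A u q.

Lemma ratio_pow_close : u <= 1 ->
  Rabs ((A * exp (- u)) ^ n - exp (- q) ^ n) <= INR n * u ^ 3.
Proof.
  intros Hu1. pose proof (step_ratio_pos_le_1 A u q Hstep). destruct Hstep as (_ & Hq & _).
  assert (exp (- q) <= 1) by (apply exp_le_1; lra). pose proof (exp_pos (- q)).
  eapply Rle_trans; [apply pow_sub_pow_abs_le; lra|].
  apply Rmult_le_compat_l; [apply pos_INR | exact (step_ratio_close A u q Hstep Hu1)].
Qed.

Lemma ratio_pow_le_exp : u <= 1 -> (A * exp (- u)) ^ n <= exp (- (INR n * q) / 3).
Proof.
  intros Hu1. pose proof (step_ratio_pos_le_1 A u q Hstep).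
  eapply Rle_trans; [apply pow_incr; split; [lra | exact (step_ratio_le_exp_quart A u q Hstep Hu1)]|].
  rewrite exp_pow. right. f_equal. field.
Qed.

Lemma ratio_pow_tail : (1 <= n)%nat -> 1 <= u ->
  (A * exp (- u)) ^ n <= (39 / 40) ^ (n - 1) * (A * exp (- u)).
Proof.
  intros Hn Hu1. pose proof (step_ratio_pos_le_1 A u q Hstep).
  apply pow_le_geometric; [exact Hn | split; [lra | exact (step_ratio_tail A u q Hstep Hu1)]].
Qed.

End RatioPow.

Lemma scaled_cube_le (n : nat) (k S r : R) : (1 <= n)%nat -> 0 < k -> 0 <= S <= k * r ^ 2 ->
  INR n * (S / (2 * k * sqrt (INR n))) ^ 3 <= r ^ 6 / (8 * sqrt (INR n)).
Proof.
  intros Hn Hk HS. destruct (sqrt_INR_facts n Hn) as [Hsq Hsq2].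
  set (sq := sqrt (INR n)) in *. rewrite <- Hsq2.
  replace (sq * sq * (S / (2 * k * sq)) ^ 3) with (S ^ 3 / (8 * k ^ 3 * sq)) by (field; lra).
  replace (r ^ 6 / (8 * sq)) with ((k * r ^ 2) ^ 3 / (8 * k ^ 3 * sq)) by (field; lra).
  apply Rmult_le_compat_r; [left; apply Rinv_0_lt_compat; pose proof (pow_lt k 3 Hk); nra|].
  apply pow_incr. lra.
Qed.

Lemma psi_n_2_close (n : nat) (t : nat -> R) (r : R) : (1 <= n)%nat ->
  Rabs (t 0%nat) <= r -> Rabs (t 1%nat) <= r -> r ^ 2 <= sqrt (INR n) ->
  Rabs (psi_n 2 n t - psi 2 t) <= r ^ 6 / (8 * sqrt (INR n)).
Proof.
  intros Hn H0 H1 Hr. destruct (sqrt_INR_facts n Hn) as [Hsq _].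
  pose proof (pow_maj_Rabs _ _ 2 H0). pose proof (pow_maj_Rabs _ _ 2 H1).
  pose proof (pow2_ge_0 (t 0%nat)). pose proof (pow2_ge_0 (t 1%nat)).
  rewrite (psi_n_2_eq n t Hn), psi_2_eq, (quart2_rescale n t Hn), Ropp_mult_distr_r, <- exp_pow.
  eapply Rle_trans; [apply ratio_pow_close; [apply step_bounds_2|]|].
  - rewrite quad2_rescale by auto. apply Rle_div_l; lra.
  - rewrite quad2_rescale by auto. replace (4 * sqrt (INR n)) with (2 * 2 * sqrt (INR n)) by ring.
    apply scaled_cube_le; auto; lra.
Qed.

Lemma psi_n_3_close (n : nat) (t : nat -> R) (r : R) : (1 <= n)%nat ->
  Rabs (t 0%nat) <= r -> Rabs (t 1%nat) <= r -> Rabs (t 2%nat) <= r -> r ^ 2 <= sqrt (INR n) ->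
  Rabs (psi_n 3 n t - psi 3 t) <= r ^ 6 / (8 * sqrt (INR n)).
Proof.
  intros Hn H0 H1 H2 Hr. destruct (sqrt_INR_facts n Hn) as [Hsq _].
  pose proof (pow_maj_Rabs _ _ 2 H0). pose proof (pow_maj_Rabs _ _ 2 H1).
  pose proof (pow_maj_Rabs _ _ 2 H2).
  pose proof (pow2_ge_0 (t 0%nat)). pose proof (pow2_ge_0 (t 1%nat)). pose proof (pow2_ge_0 (t 2%nat)).
  rewrite (psi_n_3_eq n t Hn), psi_3_eq, (quart3_rescale n t Hn), Ropp_mult_distr_r, <- exp_pow.
  eapply Rle_trans; [apply ratio_pow_close; [apply step_bounds_3|]|].
  - rewrite quad3_rescale by auto. apply Rle_div_l; lra.
  - rewrite quad3_rescale by auto. replace (6 * sqrt (INR n)) with (2 * 3 * sqrt (INR n)) by ring.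
    apply scaled_cube_le; auto; lra.
Qed.

(** * Continuity in two and three variables *)

Definition continuous2 (f : R -> R -> R) : Prop :=
  forall x y, continuous (fun p : R * R => f (fst p) (snd p)) (x, y).

Definition continuous3 (f : R -> R -> R -> R) : Prop :=
  forall x y z, continuous (fun p : R * (R * R) => f (fst p) (fst (snd p)) (snd (snd p))) (x, (y, z)).

Lemma continuous3_eps (f : R -> R -> R -> R) : continuous3 f ->
  forall x y z eps, 0 < eps -> exists del, 0 < del /\
  forall x' y' z', Rabs (x' - x) < del -> Rabs (y' - y) < del -> Rabs (z' - z) < del ->
  Rabs (f x' y' z' - f x y z) < eps.
Proof.
  intros H x y z eps Heps.
  destruct (proj1 (filterlim_locally _ _) (H x y z) (mkposreal eps Heps)) as [del Hd].
  exists (pos del); split; [apply cond_pos|].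
  intros x' y' z' h1 h2 h3. exact (Hd (x', (y', z')) (conj h1 (conj h2 h3))).
Qed.

Lemma continuous2_of_eps (f : R -> R -> R) :
  (forall x y eps, 0 < eps -> exists del, 0 < del /\
     forall x' y', Rabs (x' - x) < del -> Rabs (y' - y) < del -> Rabs (f x' y' - f x y) < eps) ->
  continuous2 f.
Proof.
  intros H x y. apply filterlim_locally. intros eps.
  destruct (H x y eps (cond_pos eps)) as [del [Hd H']].
  exists (mkposreal del Hd). intros [x' y'] [h1 h2]. exact (H' x' y' h1 h2).
Qed.

Lemma continuous_pair {U : UniformSpace} {V W : UniformSpace} (f : U -> V) (g : U -> W) (q : U) :
  continuous f q -> continuous g q -> continuous (fun q => (f q, g q)) q.
Proof.
  intros Hf Hg. apply filterlim_locally. intros eps.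
  generalize (filter_and _ _ (proj1 (filterlim_locally _ _) Hf eps) (proj1 (filterlim_locally _ _) Hg eps)).
  apply filter_imp. intros x [h1 h2]. split; assumption.
Qed.

Lemma continuous_fst3 (q : R * (R * R)) : continuous (fun q : R * (R * R) => fst q) q.
Proof. destruct q; apply continuous_fst. Qed.

Lemma continuous_snd3_fst (q : R * (R * R)) : continuous (fun q : R * (R * R) => fst (snd q)) q.
Proof. destruct q as [a [b c]]. apply (continuous_comp snd fst); [apply continuous_snd | apply continuous_fst]. Qed.

Lemma continuous_snd3_snd (q : R * (R * R)) : continuous (fun q : R * (R * R) => snd (snd q)) q.
Proof. destruct q as [a [b c]]. apply (continuous_comp snd snd); apply continuous_snd. Qed.

Lemma continuous3_const (c : R) : continuous3 (fun _ _ _ => c).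
Proof. intros x y z. apply continuous_const. Qed.

Lemma continuous3_proj0 : continuous3 (fun x _ _ => x).
Proof. intros x y z. apply continuous_fst3. Qed.

Lemma continuous3_proj1 : continuous3 (fun _ y _ => y).
Proof. intros x y z. apply continuous_snd3_fst. Qed.

Lemma continuous3_proj2 : continuous3 (fun _ _ z => z).
Proof. intros x y z. apply continuous_snd3_snd. Qed.

Lemma continuous3_plus (f g : R -> R -> R -> R) : continuous3 f -> continuous3 g ->
  continuous3 (fun x y z => f x y z + g x y z).
Proof. intros Hf Hg x y z. exact (continuous_plus _ _ _ (Hf x y z) (Hg x y z)). Qed.

Lemma continuous3_mult (f g : R -> R -> R -> R) : continuous3 f -> continuous3 g ->
  continuous3 (fun x y z => f x y z * g x y z).
Proof. intros Hf Hg x y z. exact (continuous_mult _ _ _ (Hf x y z) (Hg x y z)). Qed.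

Lemma continuous3_comp (h : R -> R) (f : R -> R -> R -> R) : (forall x, continuous h x) ->
  continuous3 f -> continuous3 (fun x y z => h (f x y z)).
Proof. intros Hh Hf x y z. exact (continuous_comp _ h _ (Hf x y z) (Hh _)). Qed.

Lemma continuous_Ropp (x : R) : continuous Ropp x.
Proof. apply (continuous_opp (fun v : R => v)), continuous_id. Qed.

Lemma continuous3_opp (f : R -> R -> R -> R) : continuous3 f -> continuous3 (fun x y z => - f x y z).
Proof. apply continuous3_comp, continuous_Ropp. Qed.

Lemma continuous3_minus (f g : R -> R -> R -> R) : continuous3 f -> continuous3 g ->
  continuous3 (fun x y z => f x y z - g x y z).
Proof. intros. apply continuous3_plus; [|apply continuous3_opp]; auto. Qed.

Lemma continuous3_pow (f : R -> R -> R -> R) (k : nat) : continuous3 f ->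
  continuous3 (fun x y z => f x y z ^ k).
Proof.
  intros Hf; induction k as [|k IH]; simpl; [apply continuous3_const | apply continuous3_mult; auto].
Qed.

Lemma continuous3_div_const (f : R -> R -> R -> R) (c : R) : continuous3 f ->
  continuous3 (fun x y z => f x y z / c).
Proof. intros Hf. apply continuous3_mult; [exact Hf | apply continuous3_const]. Qed.

Lemma continuous3_inv (f : R -> R -> R -> R) : continuous3 f -> (forall x y z, 0 < f x y z) ->
  continuous3 (fun x y z => / f x y z).
Proof.
  intros Hf Hp x y z. apply (continuous_comp _ Rinv _ (Hf x y z)).
  apply continuity_pt_filterlim, continuity_pt_inv; [apply continuity_pt_id|].
  unfold id; simpl. specialize (Hp x y z). lra.
Qed.

Lemma continuous3_ext (f g : R -> R -> R -> R) : (forall x y z, f x y z = g x y z) ->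
  continuous3 g -> continuous3 f.
Proof.
  intros H Hg x y z. eapply continuous_ext; [|apply Hg]. intros [a [b c]]. symmetry; apply H.
Qed.

Lemma continuous3_perm (f : R -> R -> R -> R) (p : R * (R * R) -> R * (R * R)) :
  (forall q, continuous p q) -> continuous3 f ->
  continuous3 (fun x y z => f (fst (p (x, (y, z)))) (fst (snd (p (x, (y, z))))) (snd (snd (p (x, (y, z)))))).
Proof.
  intros Hp Hf x y z.
  apply (continuous_ext (fun q => f (fst (p q)) (fst (snd (p q))) (snd (snd (p q))))).
  { intros [a [b c]]. reflexivity. }
  apply (continuous_comp p (fun q => f (fst q) (fst (snd q)) (snd (snd q)))); [apply Hp|].
  destruct (p (x, (y, z))) as [a [b c]]. apply Hf.
Qed.

Lemma continuous3_swap01 (f : R -> R -> R -> R) : continuous3 f -> continuous3 (fun x y z => f y x z).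
Proof.
  intros Hf. apply (continuous3_perm f (fun q => (fst (snd q), (fst q, snd (snd q))))); auto.
  intros q. apply continuous_pair; [|apply continuous_pair];
    auto using continuous_fst3, continuous_snd3_fst, continuous_snd3_snd.
Qed.

Lemma continuous3_swap12 (f : R -> R -> R -> R) : continuous3 f -> continuous3 (fun x y z => f x z y).
Proof.
  intros Hf. apply (continuous3_perm f (fun q => (fst q, (snd (snd q), fst (snd q))))); auto.
  intros q. apply continuous_pair; [|apply continuous_pair];
    auto using continuous_fst3, continuous_snd3_fst, continuous_snd3_snd.
Qed.

Lemma continuous3_of_2 (f : R -> R -> R) : continuous2 f -> continuous3 (fun x y _ => f x y).
Proof.
  intros Hf x y z.
  apply (continuous_comp (fun q : R * (R * R) => (fst q, fst (snd q))) (fun p : R * R => f (fst p) (snd p))).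
  - apply continuous_pair; [apply continuous_fst3 | apply continuous_snd3_fst].
  - apply Hf.
Qed.

Lemma continuous2_of_3 (f : R -> R -> R -> R) (c : R) : continuous3 f -> continuous2 (fun x y => f x y c).
Proof.
  intros Hf x y.
  apply (continuous_comp (fun p : R * R => (fst p, (snd p, c))) (fun q : R * (R * R) => f (fst q) (fst (snd q)) (snd (snd q)))).
  - apply continuous_pair; [apply continuous_fst|].
    apply continuous_pair; [apply continuous_snd | apply continuous_const].
  - apply Hf.
Qed.

Lemma continuous2_of_3_flat (f : R -> R -> R) : continuous3 (fun x y _ => f x y) -> continuous2 f.
Proof. exact (continuous2_of_3 (fun x y _ => f x y) 0). Qed.

Lemma continuous_of_2 (f : R -> R -> R) (c : R) : continuous2 f -> forall x, continuous (fun x => f x c) x.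
Proof.
  intros Hf x.
  apply (continuous_comp (fun x : R => (x, c)) (fun p : R * R => f (fst p) (snd p))).
  - apply continuous_pair; [apply continuous_id | apply continuous_const].
  - apply Hf.
Qed.

Lemma continuous_of_3 (g : R -> R) : continuous3 (fun x _ _ => g x) -> forall x, continuous g x.
Proof. intros H. apply (continuous_of_2 (fun x _ => g x) 0), (continuous2_of_3 (fun x y _ => g x) 0), H. Qed.

Lemma continuous2_swap (f : R -> R -> R) : continuous2 f -> continuous2 (fun x y => f y x).
Proof.
  intros Hf. apply (continuous2_of_3 (fun x y _ => f y x) 0).
  apply (continuous3_swap01 (fun x y _ => f x y)), continuous3_of_2, Hf.
Qed.

Lemma continuous2_ext (f g : R -> R -> R) : (forall x y, f x y = g x y) ->
  continuous2 g -> continuous2 f.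
Proof. intros H Hg x y. eapply continuous_ext; [|apply Hg]. intros [a b]. symmetry; apply H. Qed.

Ltac continuity3 :=
  repeat match goal with
  | |- continuous3 (fun _ _ _ => ?c) => apply (continuous3_const c)
  | |- continuous3 (fun x _ _ => x) => apply continuous3_proj0
  | |- continuous3 (fun _ y _ => y) => apply continuous3_proj1
  | |- continuous3 (fun _ _ z => z) => apply continuous3_proj2
  | |- continuous3 (fun x y z => @?f x y z + @?g x y z) => apply (continuous3_plus f g)
  | |- continuous3 (fun x y z => @?f x y z - @?g x y z) => apply (continuous3_minus f g)
  | |- continuous3 (fun x y z => @?f x y z * @?g x y z) => apply (continuous3_mult f g)
  | |- continuous3 (fun x y z => @?f x y z / ?c) => apply (continuous3_div_const f c)
  | |- continuous3 (fun x y z => @?f x y z / @?g x y z) => unfold Rdiv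
  | |- continuous3 (fun x y z => - @?f x y z) => apply (continuous3_opp f)
  | |- continuous3 (fun x y z => @?f x y z ^ ?k) => apply (continuous3_pow f k)
  | |- continuous3 (fun x y z => exp (@?f x y z)) => apply (continuous3_comp exp f continuous_exp)
  | |- continuous3 (fun x y z => Rabs (@?f x y z)) => apply (continuous3_comp Rabs f continuous_Rabs)
  | |- continuous3 (fun x y z => cosh (@?f x y z)) => unfold cosh
  | |- continuous3 (fun x y z => / @?f x y z) => apply (continuous3_inv f)
  | H : forall x, continuous ?h x |- continuous3 (fun x y z => ?h (@?f x y z)) =>
      apply (continuous3_comp h f H)
  end.

Ltac continuity2 := apply continuous2_of_3_flat; cbv beta; continuity3.

Lemma ex_RInt_of_continuous (f : R -> R) (a b : R) : (forall x, continuous f x) -> ex_RInt f a b.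
Proof. intros Hf. apply (ex_RInt_continuous (V := R_CompleteNormedModule)). intros; apply Hf. Qed.

Lemma ex_RInt_of_continuous3 (f : R -> R -> R -> R) (y z a b : R) : continuous3 f ->
  ex_RInt (fun x => f x y z) a b.
Proof.
  intros Hf. apply ex_RInt_of_continuous. intros x.
  apply (continuous_comp (fun x : R => (x, (y, z))) (fun q : R * (R * R) => f (fst q) (fst (snd q)) (snd (snd q)))).
  - apply continuous_pair; [apply continuous_id | apply continuous_const].
  - apply Hf.
Qed.

Lemma ex_RInt_of_continuous2 (f : R -> R -> R) (y a b : R) : continuous2 f -> ex_RInt (fun x => f x y) a b.
Proof. intros Hf. apply (ex_RInt_of_continuous3 (fun x y z => f x y) y 0), continuous3_of_2, Hf. Qed.

Lemma RInt_extR (f g : R -> R) (a b : R) : (forall x, f x = g x) -> RInt f a b = RInt g a b.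
Proof. intros H. apply RInt_ext. intros x _. apply H. Qed.

Lemma RInt_minusR (f g : R -> R) (a b : R) : ex_RInt f a b -> ex_RInt g a b ->
  RInt (fun x => f x - g x) a b = RInt f a b - RInt g a b.
Proof. intros; apply (RInt_minus (V := R_CompleteNormedModule)); auto. Qed.

Lemma RInt_plusR (f g : R -> R) (a b : R) : ex_RInt f a b -> ex_RInt g a b ->
  RInt (fun x => f x + g x) a b = RInt f a b + RInt g a b.
Proof. intros; apply (RInt_plus (V := R_CompleteNormedModule)); auto. Qed.

Lemma RInt_scalR (f : R -> R) (c a b : R) : ex_RInt f a b -> RInt (fun x => c * f x) a b = c * RInt f a b.
Proof. intros; apply (RInt_scal (V := R_CompleteNormedModule)); auto. Qed.

Lemma pick_modulus (P : R -> R -> Prop) : (forall x, exists d, 0 < d /\ P x d) ->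
  { delta : R -> posreal | forall x, P x (delta x) }.
Proof.
  intros H.
  assert (H' : forall x, { d : posreal | P x d }).
  { intros x. apply constructive_indefinite_description.
    destruct (H x) as [d [Hd Pd]]. exists (mkposreal d Hd). exact Pd. }
  exists (fun x => proj1_sig (H' x)). intros x. apply (proj2_sig (H' x)).
Qed.

(* Uniform continuity on [a, b] x (near y, z), obtained from a finite subcover of [a, b]. *)
Lemma continuous2_RInt_param_le (f : R -> R -> R -> R) (a b : R) : continuous3 f -> a <= b ->
  continuous2 (fun y z => RInt (fun x => f x y z) a b).
Proof.
  intros Hf Hab. apply continuous2_of_eps. intros y z eps Heps.
  set (e' := eps / (b - a + 1)).
  assert (He' : 0 < e') by (unfold e'; apply Rdiv_lt_0_compat; lra).
  destruct (pick_modulus (fun x d => forall x' y' z', Rabs (x' - x) < d -> Rabs (y' - y) < d ->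
     Rabs (z' - z) < d -> Rabs (f x' y' z' - f x y z) < e' / 2)) as [delta Hdel].
  { intros x. apply (continuous3_eps f Hf x y z (e' / 2)). lra. }
  destruct (compactness_value_1d a b delta) as [dd Hdd].
  exists dd. split; [apply cond_pos|]. intros y' z' hy hz.
  assert (Hpt : forall x, a <= x <= b -> Rabs (f x y' z' - f x y z) <= e').
  { intros x Hx. apply NNPP. intros Hn. apply (Hdd x (conj (proj1 Hx) (proj2 Hx))).
    intros [t [Ht [Hxt Hdt]]]. apply Hn.
    assert (A1 := Hdel t x y' z' Hxt ltac:(lra) ltac:(lra)).
    assert (A2 := Hdel t x y z Hxt ltac:(rewrite Rminus_diag, Rabs_R0; apply cond_pos)
                    ltac:(rewrite Rminus_diag, Rabs_R0; apply cond_pos)).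
    apply Rabs_le_between'. apply Rabs_lt_between' in A1. apply Rabs_lt_between' in A2. lra. }
  rewrite <- RInt_minusR by (apply ex_RInt_of_continuous3; exact Hf).
  eapply Rle_lt_trans.
  - apply abs_RInt_le_const; [exact Hab | | exact Hpt].
    apply (ex_RInt_minus (V := R_NormedModule)); apply ex_RInt_of_continuous3; exact Hf.
  - assert (e' * (b - a + 1) = eps) by (unfold e'; field; lra). nra.
Qed.

Lemma continuous2_RInt_param (f : R -> R -> R -> R) (a b : R) : continuous3 f ->
  continuous2 (fun y z => RInt (fun x => f x y z) a b).
Proof.
  intros Hf. destruct (Rle_dec a b) as [H|H]; [now apply continuous2_RInt_param_le|].
  apply (continuous2_ext _ (fun y z => - RInt (fun x => f x y z) b a)).
  - intros y z. rewrite <- (opp_RInt_swap (V := R_CompleteNormedModule)); [reflexivity|].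
    apply ex_RInt_of_continuous3; auto.
  - apply (continuous2_of_3 (fun y z _ => - RInt (fun x => f x y z) b a) 0).
    apply (continuous3_opp (fun y z _ => RInt (fun x => f x y z) b a)), continuous3_of_2.
    apply continuous2_RInt_param_le; auto; lra.
Qed.

Lemma continuous_RInt_param (f : R -> R -> R) (a b : R) : continuous2 f ->
  forall y, continuous (fun y => RInt (fun x => f x y) a b) y.
Proof.
  intros Hf. apply (continuous_of_2 (fun y z => RInt (fun x => f x y) a b) 0).
  apply (continuous2_RInt_param (fun x y z => f x y)), continuous3_of_2, Hf.
Qed.

Lemma is_derive_RInt_upper (f : R -> R -> R) (c x z : R) : continuous2 f ->
  is_derive (fun z => RInt (fun y => f x y) c z) z (f x z).
Proof.
  intros Hf. assert (Hfx : forall y, continuous (fun y => f x y) y)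
    by exact (continuous_of_2 (fun y x => f x y) x (continuous2_swap f Hf)).
  apply (is_derive_RInt (V := R_CompleteNormedModule) (fun y => f x y) _ c z); [|apply Hfx].
  apply filter_forall. intros z'. apply RInt_correct, ex_RInt_of_continuous, Hfx.
Qed.

Lemma is_derive_RInt_RInt_upper (f : R -> R -> R) (a b c z : R) : continuous2 f ->
  is_derive (fun z => RInt (fun x => RInt (fun y => f x y) c z) a b) z (RInt (fun x => f x z) a b).
Proof.
  intros Hf. assert (Hfs : continuous2 (fun x y => f y x)) by (apply continuous2_swap; auto).
  replace (RInt (fun x => f x z) a b) with (RInt (fun x => Derive (fun u => RInt (fun y => f x y) c u) z) a b)
    by (apply RInt_ext; intros x _; apply is_derive_unique, is_derive_RInt_upper, Hf).
  apply (is_derive_RInt_param (fun u x => RInt (fun y => f x y) c u) a b z).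
  - apply filter_forall. intros u x _. eexists. apply is_derive_RInt_upper, Hf.
  - intros x _. apply (continuity_2d_pt_ext (fun u v => f v u)).
    + intros u v. symmetry. apply is_derive_unique, is_derive_RInt_upper, Hf.
    + apply continuity_2d_pt_filterlim, Hfs.
  - apply filter_forall. intros u. apply ex_RInt_of_continuous.
    apply (continuous_RInt_param (fun y x => f x y)), Hfs.
Qed.

(* Both sides have derivative [RInt (fun x => f x z) a b] in the upper bound [z] of the
   outer integral and vanish at [z = c]. *)
Lemma RInt_fubini2 (f : R -> R -> R) (a b c e : R) : continuous2 f ->
  RInt (fun y => RInt (fun x => f x y) a b) c e = RInt (fun x => RInt (fun y => f x y) c e) a b.
Proof.
  intros Hf.
  set (h := fun z => RInt (fun x => f x z) a b).
  set (Psi := fun z => RInt h c z).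
  set (Phi := fun z => RInt (fun x => RInt (fun y => f x y) c z) a b).
  assert (DPsi : forall z, is_derive Psi z (h z)).
  { intros z. apply (is_derive_RInt (V := R_CompleteNormedModule) h Psi c z);
      [apply filter_forall; intros z'; apply RInt_correct, ex_RInt_of_continuous|];
      apply continuous_RInt_param, Hf. }
  assert (DPhi : forall z, is_derive Phi z (h z)) by exact (fun z => is_derive_RInt_RInt_upper f a b c z Hf).
  assert (Hc : Phi c = 0 /\ Psi c = 0).
  { split; [|apply (RInt_point (V := R_CompleteNormedModule))].
    unfold Phi. rewrite (RInt_ext _ (fun _ => 0)).
    - rewrite (RInt_const (V := R_CompleteNormedModule)). apply Rmult_0_r.
    - intros x _. apply (RInt_point (V := R_CompleteNormedModule)). }
  set (g := fun z => minus (Phi z) (Psi z)).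
  assert (Hg : forall x y, x < y -> g x = g y).
  { intros x y Hxy. apply (eq_is_derive g); [|exact Hxy].
    intros t _. assert (D := is_derive_minus Phi Psi t (h t) (h t) (DPhi t) (DPsi t)).
    rewrite minus_eq_zero in D. exact D. }
  assert (Hce : g c = g e).
  { destruct (Rtotal_order c e) as [H|[->|H]]; [apply Hg; auto | reflexivity | symmetry; apply Hg; auto]. }
  unfold g, minus, plus, opp in Hce; simpl in Hce. unfold Phi, Psi in *. lra.
Qed.

Fixpoint box_value (k : nat) (F : (nat -> R) -> R) (r : R) : R :=
  match k with
  | O => F (fun _ => 0)
  | S k' => RInt (fun x => box_value k' (fun v => F (upd v k' x)) r) (- r) r
  end.

Lemma is_RInt_Defs_unique (g : R -> R) (a b l : R) : Defs.is_RInt g a b l -> l = RInt g a b.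
Proof. intros [pr Hpr]. rewrite (RInt_Reals g a b pr). auto. Qed.

Lemma is_RInt_Defs_of_ex (g : R -> R) (a b : R) : ex_RInt g a b -> Defs.is_RInt g a b (RInt g a b).
Proof. intros H. exists (ex_RInt_Reals_0 _ _ _ H). symmetry. apply RInt_Reals. Qed.

Lemma box_int_unique (k : nat) (F : (nat -> R) -> R) (r l : R) : box_int k F r l -> l = box_value k F r.
Proof.
  revert F l; induction k as [|k IH]; intros F l H; simpl in *; [exact H|].
  destruct H as [g [Hg Hl]]. rewrite (is_RInt_Defs_unique _ _ _ _ Hl).
  apply RInt_ext. intros x _. apply IH, Hg.
Qed.

Definition vec2 (a b : R) : nat -> R := upd (upd (fun _ => 0) 0 a) 1 b.
Definition vec3 (a b c : R) : nat -> R := upd (upd (upd (fun _ => 0) 0 a) 1 b) 2 c.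

Definition int2 (f : R -> R -> R) (r : R) : R :=
  RInt (fun y => RInt (fun x => f x y) (- r) r) (- r) r.
Definition int3 (f : R -> R -> R -> R) (r : R) : R :=
  RInt (fun z => RInt (fun y => RInt (fun x => f x y z) (- r) r) (- r) r) (- r) r.

Lemma int2_ext (f g : R -> R -> R) (r : R) : (forall x y, f x y = g x y) -> int2 f r = int2 g r.
Proof. intros H. unfold int2. apply RInt_extR. intros y. apply RInt_extR. intros x. apply H. Qed.

Lemma box_value_2 (F : (nat -> R) -> R) (r : R) : box_value 2 F r = int2 (fun a b => F (vec2 a b)) r.
Proof. reflexivity. Qed.

Lemma box_value_3 (F : (nat -> R) -> R) (r : R) : box_value 3 F r = int3 (fun a b c => F (vec3 a b c)) r.
Proof. reflexivity. Qed.

Lemma box_int_2_exists (F : (nat -> R) -> R) (r : R) : continuous2 (fun a b => F (vec2 a b)) ->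
  box_int 2 F r (box_value 2 F r).
Proof.
  intros Hf. simpl.
  exists (fun x => RInt (fun y => F (upd (upd (fun _ => 0) 0 y) 1 x)) (- r) r). split.
  - intros x. exists (fun y => F (upd (upd (fun _ => 0) 0 y) 1 x)). split; [reflexivity|].
    apply is_RInt_Defs_of_ex, (ex_RInt_of_continuous2 (fun a b => F (vec2 a b))), Hf.
  - apply is_RInt_Defs_of_ex, ex_RInt_of_continuous, (continuous_RInt_param (fun a b => F (vec2 a b))), Hf.
Qed.

Lemma box_int_3_exists (F : (nat -> R) -> R) (r : R) : continuous3 (fun a b c => F (vec3 a b c)) ->
  box_int 3 F r (box_value 3 F r).
Proof.
  intros Hf. simpl. eexists. split.
  - intros x. eexists. split.
    + intros y. eexists. split; [reflexivity|].
      apply is_RInt_Defs_of_ex, (ex_RInt_of_continuous3 (fun a b c => F (vec3 a b c))), Hf.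
    + apply is_RInt_Defs_of_ex, (ex_RInt_of_continuous2 (fun b c => RInt (fun a => F (vec3 a b c)) (- r) r)).
      apply continuous2_RInt_param, Hf.
  - apply is_RInt_Defs_of_ex, ex_RInt_of_continuous.
    apply (continuous_RInt_param (fun b c => RInt (fun a => F (vec3 a b c)) (- r) r)).
    apply continuous2_RInt_param, Hf.
Qed.

Section CubeIntegrals.

Variable r : R.
Hypothesis Hr : 0 <= r.

Lemma ex_RInt_int2_inner (f : R -> R -> R) : continuous2 f ->
  ex_RInt (fun y => RInt (fun x => f x y) (- r) r) (- r) r.
Proof. intros Hf. apply ex_RInt_of_continuous, continuous_RInt_param, Hf. Qed.

Lemma ex_RInt_int3_middle (f : R -> R -> R -> R) (z : R) : continuous3 f ->
  ex_RInt (fun y => RInt (fun x => f x y z) (- r) r) (- r) r.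
Proof.
  intros Hf. apply (ex_RInt_of_continuous2 (fun y z => RInt (fun x => f x y z) (- r) r)).
  apply continuous2_RInt_param, Hf.
Qed.

Lemma ex_RInt_int3_outer (f : R -> R -> R -> R) : continuous3 f ->
  ex_RInt (fun z => RInt (fun y => RInt (fun x => f x y z) (- r) r) (- r) r) (- r) r.
Proof. intros Hf. apply ex_RInt_int2_inner, continuous2_RInt_param, Hf. Qed.

Lemma int2_le (f g : R -> R -> R) : continuous2 f -> continuous2 g ->
  (forall x y, Rabs x <= r -> Rabs y <= r -> f x y <= g x y) -> int2 f r <= int2 g r.
Proof.
  intros Hf Hg H. apply RInt_le; [lra | apply ex_RInt_int2_inner; auto | apply ex_RInt_int2_inner; auto|].
  intros y Hy. apply RInt_le; [lra | apply ex_RInt_of_continuous2; auto | apply ex_RInt_of_continuous2; auto|].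
  intros x Hx. apply H; apply Rabs_le; lra.
Qed.

Lemma int3_le (f g : R -> R -> R -> R) : continuous3 f -> continuous3 g ->
  (forall x y z, Rabs x <= r -> Rabs y <= r -> Rabs z <= r -> f x y z <= g x y z) -> int3 f r <= int3 g r.
Proof.
  intros Hf Hg H. apply RInt_le; [lra | apply ex_RInt_int3_outer; auto | apply ex_RInt_int3_outer; auto|].
  intros z Hz. apply RInt_le; [lra | apply ex_RInt_int3_middle; auto | apply ex_RInt_int3_middle; auto|].
  intros y Hy. apply RInt_le; [lra | apply ex_RInt_of_continuous3; auto | apply ex_RInt_of_continuous3; auto|].
  intros x Hx. apply H; apply Rabs_le; lra.
Qed.

Lemma int2_plus (f g : R -> R -> R) : continuous2 f -> continuous2 g ->
  int2 (fun x y => f x y + g x y) r = int2 f r + int2 g r.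
Proof.
  intros Hf Hg. unfold int2. rewrite <- RInt_plusR by (apply ex_RInt_int2_inner; auto).
  apply RInt_ext. intros y _. apply RInt_plusR; apply ex_RInt_of_continuous2; auto.
Qed.

Lemma int3_plus (f g : R -> R -> R -> R) : continuous3 f -> continuous3 g ->
  int3 (fun x y z => f x y z + g x y z) r = int3 f r + int3 g r.
Proof.
  intros Hf Hg. unfold int3. rewrite <- RInt_plusR by (apply ex_RInt_int3_outer; auto).
  apply RInt_ext. intros z _. rewrite <- RInt_plusR by (apply ex_RInt_int3_middle; auto).
  apply RInt_ext. intros y _. apply RInt_plusR; apply ex_RInt_of_continuous3; auto.
Qed.

Lemma int2_scal (f : R -> R -> R) (c : R) : continuous2 f -> int2 (fun x y => c * f x y) r = c * int2 f r.
Proof.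
  intros Hf. unfold int2. rewrite <- RInt_scalR by (apply ex_RInt_int2_inner; auto).
  apply RInt_ext. intros y _. apply RInt_scalR, ex_RInt_of_continuous2, Hf.
Qed.

Lemma int3_scal (f : R -> R -> R -> R) (c : R) : continuous3 f ->
  int3 (fun x y z => c * f x y z) r = c * int3 f r.
Proof.
  intros Hf. unfold int3. rewrite <- RInt_scalR by (apply ex_RInt_int3_outer; auto).
  apply RInt_ext. intros z _. rewrite <- RInt_scalR by (apply ex_RInt_int3_middle; auto).
  apply RInt_ext. intros y _. apply RInt_scalR, ex_RInt_of_continuous3, Hf.
Qed.

Lemma int2_prod (f g : R -> R) : (forall x, continuous f x) -> (forall x, continuous g x) ->
  int2 (fun a b => f a * g b) r = RInt f (- r) r * RInt g (- r) r.
Proof.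
  intros Hf Hg. unfold int2.
  rewrite (RInt_extR _ (fun b => RInt f (- r) r * g b)).
  - apply RInt_scalR, ex_RInt_of_continuous, Hg.
  - intros b. rewrite (RInt_extR _ (fun a => g b * f a)) by (intros; ring).
    rewrite RInt_scalR by (apply ex_RInt_of_continuous, Hf). ring.
Qed.

Lemma int3_prod (f g h : R -> R) : (forall x, continuous f x) -> (forall x, continuous g x) ->
  (forall x, continuous h x) ->
  int3 (fun a b c => f a * g b * h c) r = RInt f (- r) r * RInt g (- r) r * RInt h (- r) r.
Proof.
  intros Hf Hg Hh. unfold int3.
  rewrite (RInt_extR _ (fun c => (RInt f (- r) r * RInt g (- r) r) * h c)).
  - apply RInt_scalR, ex_RInt_of_continuous, Hh.
  - intros c. rewrite (RInt_extR _ (fun b => (RInt f (- r) r * h c) * g b)).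
    + rewrite RInt_scalR by (apply ex_RInt_of_continuous, Hg). ring.
    + intros b. rewrite (RInt_extR _ (fun a => (g b * h c) * f a)) by (intros; ring).
      rewrite RInt_scalR by (apply ex_RInt_of_continuous, Hf). ring.
Qed.

Lemma int3_swap01 (f : R -> R -> R -> R) : continuous3 f -> int3 f r = int3 (fun x y z => f y x z) r.
Proof.
  intros Hf. unfold int3. apply RInt_extR. intros z.
  apply (RInt_fubini2 (fun x y => f x y z)), continuous2_of_3, Hf.
Qed.

Lemma int3_swap12 (f : R -> R -> R -> R) : continuous3 f -> int3 f r = int3 (fun x y z => f x z y) r.
Proof.
  intros Hf. unfold int3.
  apply (RInt_fubini2 (fun y z => RInt (fun x => f x y z) (- r) r)), continuous2_RInt_param, Hf.
Qed.

End CubeIntegrals.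

(** * Integrals of Lorentzian profiles *)

Definition lorentz (k y : R) : R := / (1 + k * y ^ 2).

Lemma one_plus_mul_sq_pos (k y : R) : 0 <= k -> 0 < 1 + k * y ^ 2.
Proof. intros. pose proof (pow2_ge_0 y). nra. Qed.

Lemma lorentz_pos (k y : R) : 0 <= k -> 0 < lorentz k y.
Proof. intros. apply Rinv_0_lt_compat, one_plus_mul_sq_pos. auto. Qed.

Lemma lorentz_le_1 (k y : R) : 0 <= k -> lorentz k y <= 1.
Proof. intros. unfold lorentz. rewrite <- Rinv_1. pose proof (pow2_ge_0 y). apply Rinv_le_contravar; nra. Qed.

Lemma lorentz_rescale (k y c : R) : 0 < c -> lorentz k (y / c) = lorentz (k / c ^ 2) y.
Proof. intros. unfold lorentz. f_equal. field. lra. Qed.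

Lemma lorentz_ge_half (M y : R) : 0 < M -> Rabs y <= M -> 1 / 2 <= lorentz (/ M ^ 2) y.
Proof.
  intros HR Hy. unfold lorentz. pose proof (pow_maj_Rabs M y 2 Hy). pose proof (pow_lt M 2 HR).
  assert (/ M ^ 2 * y ^ 2 <= 1).
  { apply (Rmult_le_reg_l (M ^ 2)); auto. rewrite <- Rmult_assoc, Rinv_r by lra. lra. }
  assert (0 <= / M ^ 2 * y ^ 2) by (apply Rmult_le_pos; [left; apply Rinv_0_lt_compat|apply pow2_ge_0]; lra).
  apply (Rmult_le_reg_r (1 + / M ^ 2 * y ^ 2)); [lra|]. rewrite Rinv_l by lra. lra.
Qed.

Lemma continuous3_lorentz (k g : R -> R -> R -> R) : continuous3 k -> continuous3 g ->
  (forall x y z, 0 <= k x y z) -> continuous3 (fun x y z => lorentz (k x y z) (g x y z)).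
Proof.
  intros Hk Hg Hp. unfold lorentz. continuity3; auto.
  intros x y z. apply one_plus_mul_sq_pos, Hp.
Qed.

Lemma continuous_lorentz (k : R) : 0 <= k -> forall y, continuous (lorentz k) y.
Proof.
  intros Hk. apply (continuous_of_3 (lorentz k)).
  apply (continuous3_lorentz (fun _ _ _ => k) (fun x _ _ => x)); [continuity3 | continuity3 | auto].
Qed.

Lemma RInt_lorentz_le (k r : R) : 0 < k -> 0 <= r -> RInt (lorentz k) (- r) r <= PI / sqrt k.
Proof.
  intros Hk Hr. set (s := sqrt k). assert (Hs : 0 < s) by (apply sqrt_lt_R0; auto).
  assert (Hss : s * s = k) by (apply sqrt_sqrt; lra).
  assert (H : is_RInt (lorentz k) (- r) r (minus (atan (s * r) / s) (atan (s * - r) / s))).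
  { apply (is_RInt_derive (fun y => atan (s * y) / s)).
    - intros x _. unfold lorentz. auto_derive; [auto|].
      replace (k * x ^ 2) with ((s * x) ^ 2) by (rewrite <- Hss; ring).
      pose proof (pow2_ge_0 (s * x)). field. split; [lra | nra].
    - intros x _. apply continuous_lorentz. lra. }
  rewrite (is_RInt_unique _ _ _ _ H). unfold minus, plus, opp; simpl.
  replace (s * - r) with (- (s * r)) by ring. rewrite atan_opp.
  pose proof (atan_bound (s * r)). apply (Rmult_le_reg_r s); auto.
  replace ((atan (s * r) / s + - (- atan (s * r) / s)) * s) with (2 * atan (s * r)) by (field; lra).
  replace (PI / s * s) with PI by (field; lra). lra.
Qed.

Lemma RInt_lorentz_nonneg (k r : R) : 0 <= k -> 0 <= r -> 0 <= RInt (lorentz k) (- r) r.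
Proof.
  intros Hk Hr. apply RInt_ge_0; [lra | apply ex_RInt_of_continuous, continuous_lorentz; auto|].
  intros x _. left. apply lorentz_pos, Hk.
Qed.

Lemma RInt_lorentz_inv_sq_le (M r : R) : 0 < M -> 0 <= r -> RInt (lorentz (/ M ^ 2)) (- r) r <= PI * M.
Proof.
  intros HR Hr. eapply Rle_trans; [apply RInt_lorentz_le; auto; apply Rinv_0_lt_compat, pow_lt; lra|].
  rewrite sqrt_inv, sqrt_pow2 by lra. right. field. lra.
Qed.

Lemma int2_lorentz_le (k r : R) : 0 < k -> 0 <= r ->
  int2 (fun a b => lorentz k a * lorentz k b) r <= PI ^ 2 / k.
Proof.
  intros Hk Hr. rewrite int2_prod by (apply continuous_lorentz; lra).
  pose proof (RInt_lorentz_le k r Hk Hr). pose proof (RInt_lorentz_nonneg k r ltac:(lra) Hr).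
  assert (Hs : 0 < sqrt k) by (apply sqrt_lt_R0; auto). pose proof (sqrt_sqrt k ltac:(lra)).
  replace (PI ^ 2 / k) with ((PI / sqrt k) * (PI / sqrt k)) by (rewrite <- H1 at 3; field; lra).
  apply Rmult_le_compat; auto.
Qed.

Lemma int3_lorentz_le (k r : R) : 0 < k <= 1 -> 0 <= r ->
  int3 (fun a b c => lorentz k a * lorentz k b * lorentz k c) r <= PI ^ 3 / k ^ 2.
Proof.
  intros Hk Hr. rewrite int3_prod by (apply continuous_lorentz; lra).
  pose proof (RInt_lorentz_le k r ltac:(lra) Hr). pose proof (RInt_lorentz_nonneg k r ltac:(lra) Hr).
  assert (Hs : 0 < sqrt k) by (apply sqrt_lt_R0; lra). pose proof (sqrt_sqrt k ltac:(lra)).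
  assert (k <= sqrt k) by (rewrite <- (sqrt_pow2 k) at 1 by lra; apply sqrt_le_1_alt; nra).
  pose proof PI_RGT_0.
  apply (Rle_trans _ ((PI / sqrt k) * (PI / sqrt k) * (PI / sqrt k))).
  - apply Rmult_le_compat; auto; [apply Rmult_le_pos; auto | apply Rmult_le_compat; auto].
  - replace ((PI / sqrt k) * (PI / sqrt k) * (PI / sqrt k)) with (PI ^ 3 / (k * sqrt k))
      by (rewrite <- H1 at 1; field; lra).
    apply Rmult_le_compat_l; [apply pow_le; lra|]. apply Rinv_le_contravar; [nra|]. simpl. nra.
Qed.

(* [outer_weight M] is [>= 1] outside [[-M, M]] and has integral [O(1/M)] against
   [lorentz 1]. *)
Definition outer_weight (M y : R) : R := 2 * y ^ 2 / (M ^ 2 + y ^ 2).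

Lemma outer_weight_nonneg (M y : R) : 0 < M -> 0 <= outer_weight M y.
Proof.
  intros HR. unfold outer_weight. pose proof (pow2_ge_0 y). pose proof (pow_lt M 2 HR).
  apply Rmult_le_pos; [lra | left; apply Rinv_0_lt_compat; lra].
Qed.

Lemma outer_weight_mono (M a c : R) : 0 < M -> a ^ 2 <= c ^ 2 -> outer_weight M a <= outer_weight M c.
Proof.
  intros HR H. unfold outer_weight. pose proof (pow_lt M 2 HR). pose proof (pow2_ge_0 a).
  apply Rmult_le_reg_r with ((M ^ 2 + a ^ 2) * (M ^ 2 + c ^ 2)); [nra|].
  field_simplify; nra.
Qed.

Lemma outer_weight_ge_1 (M y : R) : 0 < M -> M <= Rabs y -> 1 <= outer_weight M y.
Proof.
  intros HR H. unfold outer_weight.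
  assert (M ^ 2 <= y ^ 2) by (rewrite <- (pow2_abs y); apply pow_incr; lra).
  pose proof (pow_lt M 2 HR).
  apply (Rmult_le_reg_r (M ^ 2 + y ^ 2)); [lra|]. field_simplify; lra.
Qed.

Lemma continuous_outer_weight (M : R) : 0 < M -> forall y, continuous (outer_weight M) y.
Proof.
  intros HR. apply continuous_of_3. unfold outer_weight. continuity3.
  intros x y z. pose proof (pow_lt M 2 HR). pose proof (pow2_ge_0 x). lra.
Qed.

Lemma RInt_outer_weight_lorentz_le (M r : R) : 0 < M -> 0 <= r ->
  RInt (fun c => outer_weight M c * lorentz 1 c) (- r) r <= 2 * PI / M.
Proof.
  intros HR Hr. pose proof (pow_lt M 2 HR). assert (0 < / M ^ 2) by (apply Rinv_0_lt_compat; lra).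
  apply (Rle_trans _ (RInt (fun c => 2 / M ^ 2 * lorentz (/ M ^ 2) c) (- r) r)).
  - apply RInt_le; [lra | | |].
    + apply ex_RInt_of_continuous. intros x. apply (continuous_mult (outer_weight M) (lorentz 1)).
      * apply continuous_outer_weight; auto.
      * apply continuous_lorentz; lra.
    + apply (ex_RInt_scal (V := R_NormedModule)), ex_RInt_of_continuous, continuous_lorentz; lra.
    + intros c _. unfold outer_weight, lorentz. pose proof (pow2_ge_0 c).
      replace (2 / M ^ 2 * / (1 + / M ^ 2 * c ^ 2)) with (2 / (M ^ 2 + c ^ 2)) by (field; lra).
      replace (2 * c ^ 2 / (M ^ 2 + c ^ 2) * / (1 + 1 * c ^ 2))
        with ((2 / (M ^ 2 + c ^ 2)) * (c ^ 2 / (1 + c ^ 2))) by (field; lra).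
      rewrite <- (Rmult_1_r (2 / (M ^ 2 + c ^ 2))) at 2.
      apply Rmult_le_compat_l; [apply Rlt_le, Rdiv_lt_0_compat; lra|].
      apply (Rmult_le_reg_r (1 + c ^ 2)); [lra|]. field_simplify; lra.
  - rewrite RInt_scalR by (apply ex_RInt_of_continuous, continuous_lorentz; lra).
    pose proof (RInt_lorentz_inv_sq_le M r HR Hr). pose proof PI_RGT_0.
    apply (Rle_trans _ (2 / M ^ 2 * (PI * M))).
    + apply Rmult_le_compat_l; [apply Rlt_le, Rdiv_lt_0_compat; lra | exact H1].
    + right. field. lra.
Qed.

Definition pair_lorentz3 (a b c : R) : R := lorentz 1 (a * b) * lorentz 1 (a * c) * lorentz 1 (b * c).

(* Bound for [pair_lorentz3] on the region where [c] is the largest coordinate. *)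
Definition cross_bound (a b c : R) : R := 4 * (lorentz (1 + c ^ 2) a * lorentz (1 + c ^ 2) b).

Lemma pair_lorentz3_pos (a b c : R) : 0 < pair_lorentz3 a b c.
Proof. unfold pair_lorentz3. repeat apply Rmult_lt_0_compat; apply lorentz_pos; lra. Qed.

Lemma pair_lorentz3_swap12 (a b c : R) : pair_lorentz3 a b c = pair_lorentz3 a c b.
Proof. unfold pair_lorentz3. replace (c * b) with (b * c) by ring. ring. Qed.

Lemma pair_lorentz3_rotate (a b c : R) : pair_lorentz3 a b c = pair_lorentz3 b c a.
Proof.
  unfold pair_lorentz3. replace (b * a) with (a * b) by ring. replace (c * a) with (a * c) by ring. ring.
Qed.

Lemma cross_bound_nonneg (a b c : R) : 0 <= cross_bound a b c.
Proof.
  unfold cross_bound. pose proof (pow2_ge_0 c).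
  apply Rmult_le_pos; [lra|]. apply Rmult_le_pos; left; apply lorentz_pos; lra.
Qed.

Lemma lorentz_mul_le (a c : R) : a ^ 2 <= c ^ 2 -> lorentz 1 (a * c) <= 2 * lorentz (1 + c ^ 2) a.
Proof.
  intros H. unfold lorentz. pose proof (pow2_ge_0 a). pose proof (pow2_ge_0 c).
  assert (a ^ 2 <= 1 + a ^ 2 * c ^ 2) by (destruct (Rle_dec (a ^ 2) 1); nra).
  apply (Rmult_le_reg_r ((1 + 1 * (a * c) ^ 2) * (1 + (1 + c ^ 2) * a ^ 2))); [nra|].
  replace (/ (1 + 1 * (a * c) ^ 2) * ((1 + 1 * (a * c) ^ 2) * (1 + (1 + c ^ 2) * a ^ 2)))
    with (1 + (1 + c ^ 2) * a ^ 2) by (field; nra).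
  replace (2 * / (1 + (1 + c ^ 2) * a ^ 2) * ((1 + 1 * (a * c) ^ 2) * (1 + (1 + c ^ 2) * a ^ 2)))
    with (2 * (1 + 1 * (a * c) ^ 2)) by (field; nra).
  nra.
Qed.

Lemma pair_lorentz3_le_cross (a b c : R) : a ^ 2 <= c ^ 2 -> b ^ 2 <= c ^ 2 ->
  pair_lorentz3 a b c <= cross_bound a b c.
Proof.
  intros Ha Hb. unfold pair_lorentz3, cross_bound.
  pose proof (lorentz_mul_le a c Ha). pose proof (lorentz_mul_le b c Hb).
  pose proof (lorentz_le_1 1 (a * b) ltac:(lra)). pose proof (lorentz_pos 1 (a * b) ltac:(lra)).
  pose proof (lorentz_pos 1 (a * c) ltac:(lra)). pose proof (lorentz_pos 1 (b * c) ltac:(lra)).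
  assert (lorentz 1 (a * c) * lorentz 1 (b * c) <= (2 * lorentz (1 + c ^ 2) a) * (2 * lorentz (1 + c ^ 2) b))
    by (apply Rmult_le_compat; lra).
  assert (lorentz 1 (a * b) * (lorentz 1 (a * c) * lorentz 1 (b * c))
          <= 1 * (lorentz 1 (a * c) * lorentz 1 (b * c))) by (apply Rmult_le_compat_r; nra).
  rewrite Rmult_assoc. lra.
Qed.

Section WeightedDomination.

Variable h : R -> R.
Hypothesis h_nonneg : forall x, 0 <= h x.
Hypothesis h_mono : forall x y, x ^ 2 <= y ^ 2 -> h x <= h y.

Lemma pair_lorentz3_weighted_le (a b c : R) :
  pair_lorentz3 a b c * (h a + h b + h c)
  <= 3 * (cross_bound b c a * h a + cross_bound a c b * h b + cross_bound a b c * h c).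
Proof.
  pose proof (pair_lorentz3_pos a b c).
  pose proof (h_nonneg a). pose proof (h_nonneg b). pose proof (h_nonneg c).
  assert (0 <= cross_bound b c a * h a) by (apply Rmult_le_pos; auto using cross_bound_nonneg).
  assert (0 <= cross_bound a c b * h b) by (apply Rmult_le_pos; auto using cross_bound_nonneg).
  assert (0 <= cross_bound a b c * h c) by (apply Rmult_le_pos; auto using cross_bound_nonneg).
  assert (key : forall M m, pair_lorentz3 a b c <= M -> h a + h b + h c <= 3 * m ->
            M * m <= cross_bound b c a * h a + cross_bound a c b * h b + cross_bound a b c * h c ->
            pair_lorentz3 a b c * (h a + h b + h c)
            <= 3 * (cross_bound b c a * h a + cross_bound a c b * h b + cross_bound a b c * h c)).
  { intros M m HM Hm HS. apply (Rle_trans _ (M * (3 * m))); [apply Rmult_le_compat; lra | lra]. }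
  destruct (Rle_dec (a ^ 2) (c ^ 2)), (Rle_dec (b ^ 2) (c ^ 2)), (Rle_dec (a ^ 2) (b ^ 2)).
  all: first
    [ apply (key (cross_bound a b c) (h c)); [apply pair_lorentz3_le_cross; lra
      | pose proof (h_mono a c ltac:(lra)); pose proof (h_mono b c ltac:(lra)); lra | lra]
    | apply (key (cross_bound a c b) (h b));
      [rewrite pair_lorentz3_swap12; apply pair_lorentz3_le_cross; lra
      | pose proof (h_mono a b ltac:(lra)); pose proof (h_mono c b ltac:(lra)); lra | lra]
    | apply (key (cross_bound b c a) (h a));
      [rewrite pair_lorentz3_rotate; apply pair_lorentz3_le_cross; lra
      | pose proof (h_mono b a ltac:(lra)); pose proof (h_mono c a ltac:(lra)); lra | lra] ].
Qed.

Hypothesis h_cont : forall x, continuous h x.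

Lemma continuous3_cross_weighted : continuous3 (fun a b c => cross_bound a b c * h c).
Proof.
  unfold cross_bound. apply continuous3_mult; [|apply (continuous3_comp h (fun _ _ z => z) h_cont); continuity3].
  apply continuous3_mult; [continuity3|].
  apply continuous3_mult; apply continuous3_lorentz; continuity3;
    intros; pose proof (pow2_ge_0 z); lra.
Qed.

Lemma int3_cross_weighted_le (r : R) : 0 <= r ->
  int3 (fun a b c => cross_bound a b c * h c) r <= 4 * PI ^ 2 * RInt (fun c => h c * lorentz 1 c) (- r) r.
Proof.
  intros Hr. assert (Hhl : forall c, continuous (fun c => h c * lorentz 1 c) c)
    by (intros; apply (continuous_mult h (lorentz 1)); [apply h_cont | apply continuous_lorentz; lra]).
  unfold int3. rewrite <- RInt_scalR by (apply ex_RInt_of_continuous, Hhl).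
  apply RInt_le; [lra | apply (ex_RInt_int3_outer r), continuous3_cross_weighted |
                  apply (ex_RInt_scal (V := R_NormedModule)), ex_RInt_of_continuous, Hhl |].
  intros c _. pose proof (pow2_ge_0 c). pose proof (h_nonneg c).
  rewrite (RInt_extR _ (fun b => RInt (fun a => (4 * h c) * (lorentz (1 + c ^ 2) a * lorentz (1 + c ^ 2) b)) (- r) r))
    by (intros b; apply RInt_extR; intros a; unfold cross_bound; ring).
  fold (int2 (fun a b => (4 * h c) * (lorentz (1 + c ^ 2) a * lorentz (1 + c ^ 2) b)) r).
  rewrite int2_scal by (apply (continuous2_of_3 (fun a b _ => lorentz (1 + c ^ 2) a * lorentz (1 + c ^ 2) b) 0);
                         apply continuous3_mult; apply continuous3_lorentz; continuity3; intros; lra).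
  eapply Rle_trans; [apply Rmult_le_compat_l; [lra | apply int2_lorentz_le; lra]|].
  unfold lorentz. right. field. lra.
Qed.

Lemma int3_pair_lorentz3_weighted_le (r : R) : 0 <= r ->
  int3 (fun a b c => pair_lorentz3 a b c * (h a + h b + h c)) r
  <= 36 * PI ^ 2 * RInt (fun c => h c * lorentz 1 c) (- r) r.
Proof.
  intros Hr. pose proof continuous3_cross_weighted as Hc.
  assert (Ha : continuous3 (fun a b c => cross_bound b c a * h a))
    by exact (continuous3_swap01 _ (continuous3_swap12 _ Hc)).
  assert (Hb : continuous3 (fun a b c => cross_bound a c b * h b))
    by exact (continuous3_swap12 _ Hc).
  assert (Hsum : continuous3 (fun a b c =>
            cross_bound b c a * h a + cross_bound a c b * h b + cross_bound a b c * h c))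
    by exact (continuous3_plus _ _ (continuous3_plus _ _ Ha Hb) Hc).
  assert (Hl : continuous3 (fun a b c => pair_lorentz3 a b c * (h a + h b + h c))).
  { unfold pair_lorentz3, lorentz. continuity3. all: intros; apply one_plus_mul_sq_pos; lra. }
  eapply Rle_trans.
  - apply (int3_le r Hr _ (fun a b c => 3 * (cross_bound b c a * h a
             + cross_bound a c b * h b + cross_bound a b c * h c)));
      [exact Hl | apply continuous3_mult; [continuity3 | exact Hsum] |].
    intros a b c _ _ _. apply pair_lorentz3_weighted_le.
  - rewrite int3_scal by exact Hsum.
    rewrite (int3_plus r _ _ (continuous3_plus _ _ Ha Hb) Hc), (int3_plus r _ _ Ha Hb).
    rewrite (int3_swap01 r (fun a b c => cross_bound b c a * h a)) by exact Ha.
    rewrite (int3_swap12 r (fun a b c => cross_bound a c b * h b)) by exact Hb.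
    pose proof (int3_cross_weighted_le r Hr). lra.
Qed.

End WeightedDomination.

(** * Pointwise bounds on [psi_n - psi] *)

Lemma exp_opp_le_inv (y : R) : 0 <= y -> exp (- y) <= / (1 + y).
Proof.
  intros Hy. pose proof (exp_ineq1_le y). pose proof (exp_mul_exp_opp y). pose proof (exp_pos (- y)).
  apply (Rmult_le_reg_l (1 + y)); [lra|]. rewrite Rinv_r by lra. nra.
Qed.

Lemma exp_opp_le_lorentz (k y : R) : 0 <= k -> exp (- (k * y ^ 2)) <= lorentz k y.
Proof. intros Hk. apply exp_opp_le_inv. pose proof (pow2_ge_0 y). nra. Qed.

Lemma exp_quart2_le (a b : R) : exp (- quart2 a b / 3) <= 73 ^ 2 * (lorentz 1 a * lorentz 1 b).
Proof.
  assert (K : forall y, exp (- (y ^ 4 / 288)) <= 73 * lorentz 1 y).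
  { intros y. eapply Rle_trans; [apply exp_opp_le_inv; pose proof (pow2_ge_0 (y ^ 2)); nra|].
    unfold lorentz. pose proof (pow2_ge_0 y). pose proof (pow2_ge_0 (y ^ 2 - 144)).
    apply (Rmult_le_reg_r ((1 + y ^ 4 / 288) * (1 + 1 * y ^ 2))); [apply Rmult_lt_0_compat; nra|].
    replace (/ (1 + y ^ 4 / 288) * ((1 + y ^ 4 / 288) * (1 + 1 * y ^ 2))) with (1 + y ^ 2) by (field; nra).
    replace (73 * / (1 + 1 * y ^ 2) * ((1 + y ^ 4 / 288) * (1 + 1 * y ^ 2)))
      with (73 * (1 + y ^ 4 / 288)) by (field; nra).
    nra. }
  eapply Rle_trans.
  - apply exp_le_exp_of_le. instantiate (1 := - (a ^ 4 / 288) + - (b ^ 4 / 288)).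
    unfold quart2. assert (0 <= a ^ 2 * b ^ 2) by nra. nra.
  - rewrite exp_plus. pose proof (K a). pose proof (K b).
    pose proof (exp_pos (- (a ^ 4 / 288))). pose proof (exp_pos (- (b ^ 4 / 288))).
    replace (73 ^ 2 * (lorentz 1 a * lorentz 1 b)) with ((73 * lorentz 1 a) * (73 * lorentz 1 b)) by ring.
    apply Rmult_le_compat; lra.
Qed.

Lemma exp_quart3_le (a b c : R) : exp (- quart3 a b c / 3) <= 108 ^ 3 * pair_lorentz3 a b c.
Proof.
  assert (K : forall y, exp (- (y ^ 2 / 108)) <= 108 * lorentz 1 y).
  { intros y. replace (y ^ 2 / 108) with (/ 108 * y ^ 2) by field.
    eapply Rle_trans; [apply exp_opp_le_lorentz; lra|].
    unfold lorentz. pose proof (pow2_ge_0 y).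
    apply (Rmult_le_reg_r ((1 + / 108 * y ^ 2) * (1 + 1 * y ^ 2))); [apply Rmult_lt_0_compat; nra|].
    replace (/ (1 + / 108 * y ^ 2) * ((1 + / 108 * y ^ 2) * (1 + 1 * y ^ 2))) with (1 + y ^ 2) by (field; nra).
    replace (108 * / (1 + 1 * y ^ 2) * ((1 + / 108 * y ^ 2) * (1 + 1 * y ^ 2)))
      with (108 * (1 + / 108 * y ^ 2)) by (field; nra).
    nra. }
  replace (- quart3 a b c / 3) with (- ((a * b) ^ 2 / 108) + - ((a * c) ^ 2 / 108) + - ((b * c) ^ 2 / 108))
    by (unfold quart3; field).
  rewrite !exp_plus. unfold pair_lorentz3.
  pose proof (K (a * b)). pose proof (K (a * c)). pose proof (K (b * c)).
  pose proof (exp_pos (- ((a * b) ^ 2 / 108))). pose proof (exp_pos (- ((a * c) ^ 2 / 108))).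
  replace (108 ^ 3 * (lorentz 1 (a * b) * lorentz 1 (a * c) * lorentz 1 (b * c)))
    with ((108 * lorentz 1 (a * b)) * (108 * lorentz 1 (a * c)) * (108 * lorentz 1 (b * c))) by ring.
  apply Rmult_le_compat; [nra | apply Rlt_le, exp_pos | apply Rmult_le_compat; lra | lra].
Qed.

Lemma cosh_pos (x : R) : 0 < cosh x.
Proof. unfold cosh. pose proof (exp_pos x). pose proof (exp_pos (- x)). lra. Qed.

(* [cosh x <= exp |x|], and [|x| - x^2 / (4k) <= k]. *)
Lemma cosh_mul_gauss_le (x k : R) : 0 < k ->
  cosh x * exp (- x ^ 2 / (2 * k)) <= exp k * lorentz (/ (4 * k)) x.
Proof.
  intros Hk.
  assert (Hc : cosh x <= exp (Rabs x)).
  { unfold cosh. destruct (Rle_dec 0 x).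
    - rewrite Rabs_pos_eq by lra. pose proof (exp_le_exp_of_le (- x) x ltac:(lra)). lra.
    - rewrite Rabs_left by lra. pose proof (exp_le_exp_of_le x (- x) ltac:(lra)). lra. }
  eapply Rle_trans; [apply Rmult_le_compat_r; [apply Rlt_le, exp_pos | exact Hc]|].
  rewrite <- exp_plus.
  replace (Rabs x + - x ^ 2 / (2 * k)) with (k + - (/ (4 * k) * x ^ 2) - (Rabs x - 2 * k) ^ 2 / (4 * k))
    by (rewrite <- pow2_abs; field; lra).
  eapply Rle_trans.
  - apply exp_le_exp_of_le. instantiate (1 := k + - (/ (4 * k) * x ^ 2)).
    assert (0 <= (Rabs x - 2 * k) ^ 2 / (4 * k))
      by (apply Rmult_le_pos; [apply pow2_ge_0 | left; apply Rinv_0_lt_compat; lra]).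
    lra.
  - rewrite exp_plus. apply Rmult_le_compat_l; [apply Rlt_le, exp_pos|].
    apply exp_opp_le_lorentz. left; apply Rinv_0_lt_compat; lra.
Qed.

Lemma gauss_le_lorentz (x k : R) : 0 < k -> exp (- x ^ 2 / (2 * k)) <= lorentz (/ (4 * k)) x.
Proof.
  intros Hk. eapply Rle_trans; [|apply exp_opp_le_lorentz; left; apply Rinv_0_lt_compat; lra].
  apply exp_le_exp_of_le. pose proof (pow2_ge_0 x).
  assert (0 <= x ^ 2 / (4 * k)) by (apply Rmult_le_pos; [lra | left; apply Rinv_0_lt_compat; lra]).
  replace (- x ^ 2 / (2 * k)) with (- 2 * (x ^ 2 / (4 * k))) by (field; lra).
  replace (- (/ (4 * k) * x ^ 2)) with (- (x ^ 2 / (4 * k))) by (field; lra). lra.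
Qed.

Lemma step_ratio_2_le (s0 s1 : R) :
  cosh_avg2 s0 s1 * exp (- quad2 s0 s1) <= exp 2 * (lorentz (/ 8) s0 * lorentz (/ 8) s1).
Proof.
  unfold cosh_avg2, quad2.
  replace (- ((s0 ^ 2 + s1 ^ 2) / 4)) with (- s0 ^ 2 / (2 * 2) + - s1 ^ 2 / (2 * 2)) by field.
  rewrite exp_plus. replace (/ 8) with (/ (4 * 2)) by field.
  pose proof (cosh_mul_gauss_le s0 2 ltac:(lra)). pose proof (cosh_mul_gauss_le s1 2 ltac:(lra)).
  pose proof (gauss_le_lorentz s0 2 ltac:(lra)). pose proof (gauss_le_lorentz s1 2 ltac:(lra)).
  pose proof (exp_pos (- s0 ^ 2 / (2 * 2))). pose proof (exp_pos (- s1 ^ 2 / (2 * 2))).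
  pose proof (cosh_pos s0). pose proof (cosh_pos s1). pose proof (exp_pos 2).
  pose proof (lorentz_pos (/ (4 * 2)) s0 ltac:(lra)). pose proof (lorentz_pos (/ (4 * 2)) s1 ltac:(lra)).
  assert (cosh s0 * exp (- s0 ^ 2 / (2 * 2)) * exp (- s1 ^ 2 / (2 * 2))
          <= exp 2 * lorentz (/ (4 * 2)) s0 * lorentz (/ (4 * 2)) s1) by (apply Rmult_le_compat; nra).
  assert (cosh s1 * exp (- s1 ^ 2 / (2 * 2)) * exp (- s0 ^ 2 / (2 * 2))
          <= exp 2 * lorentz (/ (4 * 2)) s1 * lorentz (/ (4 * 2)) s0) by (apply Rmult_le_compat; nra).
  nra.
Qed.

Lemma step_ratio_3_le (s0 s1 s2 : R) :
  cosh_avg3 s0 s1 s2 * exp (- quad3 s0 s1 s2)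
  <= exp 3 * (lorentz (/ 12) s0 * lorentz (/ 12) s1 * lorentz (/ 12) s2).
Proof.
  unfold cosh_avg3, quad3.
  replace (- ((s0 ^ 2 + s1 ^ 2 + s2 ^ 2) / 6))
    with (- s0 ^ 2 / (2 * 3) + - s1 ^ 2 / (2 * 3) + - s2 ^ 2 / (2 * 3)) by field.
  rewrite !exp_plus. replace (/ 12) with (/ (4 * 3)) by field.
  assert (C0 := cosh_mul_gauss_le s0 3 ltac:(lra)). assert (C1 := cosh_mul_gauss_le s1 3 ltac:(lra)).
  assert (C2 := cosh_mul_gauss_le s2 3 ltac:(lra)).
  assert (G0 := gauss_le_lorentz s0 3 ltac:(lra)). assert (G1 := gauss_le_lorentz s1 3 ltac:(lra)).
  assert (G2 := gauss_le_lorentz s2 3 ltac:(lra)).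
  assert (T : forall c gc gx gy Lc Lx Ly, 0 < c -> 0 < gc -> 0 < gx -> 0 < gy ->
            c * gc <= exp 3 * Lc -> gx <= Lx -> gy <= Ly -> c * gc * gx * gy <= exp 3 * Lc * Lx * Ly).
  { intros. assert (0 <= c * gc) by nra.
    apply Rmult_le_compat; [nra | lra | | lra]. apply Rmult_le_compat; lra. }
  pose proof (T _ _ _ _ _ _ _ (cosh_pos s0) (exp_pos _) (exp_pos _) (exp_pos _) C0 G1 G2).
  pose proof (T _ _ _ _ _ _ _ (cosh_pos s1) (exp_pos _) (exp_pos _) (exp_pos _) C1 G0 G2).
  pose proof (T _ _ _ _ _ _ _ (cosh_pos s2) (exp_pos _) (exp_pos _) (exp_pos _) C2 G0 G1).
  nra.
Qed.

Lemma abs_sub_le_add (x y : R) : 0 <= x -> 0 <= y -> Rabs (x - y) <= x + y.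
Proof. intros. apply Rabs_le. lra. Qed.

(* Used with [local] := the rescaled point lies where [quad <= 1], so that the Taylor
   estimates apply, and [inbox] := [t] lies in the cube [[-M, M]^d]. *)
Lemma abs_sub_le_three_regions (D Fn G T1 T2 T3 : R) (local inbox : Prop) :
  0 <= Fn -> 0 <= G -> G <= D -> 0 <= T1 -> 0 <= T2 -> 0 <= T3 ->
  (local -> inbox -> Rabs (Fn - G) <= T1) ->
  (local -> Fn <= D) ->
  (~ local -> Fn <= T3) ->
  (~ local -> ~ inbox) ->
  (~ inbox -> 2 * D <= T2) ->
  Rabs (Fn - G) <= T1 + T2 + T3.
Proof.
  intros HF HG HGD H1 H2 H3 Hin Hloc Htail Hfar Hout.
  pose proof (abs_sub_le_add Fn G HF HG).
  destruct (classic local) as [Hl|Hl]; [destruct (classic inbox) as [Hi|Hi]|].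
  - specialize (Hin Hl Hi). lra.
  - specialize (Hloc Hl). specialize (Hout Hi). lra.
  - specialize (Htail Hl). specialize (Hout (Hfar Hl)). lra.
Qed.

Lemma lorentz_rescale_walk (k y : R) (n : nat) : (1 <= n)%nat ->
  lorentz k (y / walk_scale n) = lorentz (k / sqrt (INR n)) y.
Proof. intros Hn. rewrite lorentz_rescale by apply walk_scale_pos. now rewrite walk_scale_sq. Qed.

Lemma outer_weight_sum_ge_1 (M a b : R) : 0 < M -> ~ (Rabs a <= M /\ Rabs b <= M) ->
  1 <= outer_weight M a + outer_weight M b.
Proof.
  intros HM H. pose proof (outer_weight_nonneg M a HM). pose proof (outer_weight_nonneg M b HM).
  destruct (Rle_dec (Rabs a) M); [destruct (Rle_dec (Rabs b) M); [tauto|]|].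
  - pose proof (outer_weight_ge_1 M b HM ltac:(lra)). lra.
  - pose proof (outer_weight_ge_1 M a HM ltac:(lra)). lra.
Qed.

Section Dimension2Bounds.

Variables (n : nat) (t : nat -> R).
Hypothesis Hn : (1 <= n)%nat.
Let a := t 0%nat.
Let b := t 1%nat.
Let u := quad2 (a / walk_scale n) (b / walk_scale n).

Lemma psi_2_le_lorentz : psi 2 t <= 73 ^ 2 * (lorentz 1 a * lorentz 1 b).
Proof.
  rewrite psi_2_eq. eapply Rle_trans; [|apply exp_quart2_le].
  apply exp_le_exp_of_le. pose proof (quart2_nonneg a b). unfold a, b in *. lra.
Qed.

Lemma psi_n_2_le_lorentz : u <= 1 -> psi_n 2 n t <= 73 ^ 2 * (lorentz 1 a * lorentz 1 b).
Proof.
  intros Hu. rewrite (psi_n_2_eq n t Hn).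
  eapply Rle_trans; [apply (ratio_pow_le_exp _ _ _ n (step_bounds_2 _ _) Hu)|].
  replace (INR n * quart2 (a / walk_scale n) (b / walk_scale n)) with (quart2 a b)
    by exact (quart2_rescale n t Hn).
  apply exp_quart2_le.
Qed.

Lemma psi_n_2_le_geometric : 1 <= u ->
  psi_n 2 n t <= (39 / 40) ^ (n - 1) * exp 2
                 * (lorentz (/ (8 * sqrt (INR n))) a * lorentz (/ (8 * sqrt (INR n))) b).
Proof.
  intros Hu. destruct (sqrt_INR_facts n Hn). rewrite (psi_n_2_eq n t Hn).
  eapply Rle_trans; [apply (ratio_pow_tail _ _ _ n (step_bounds_2 _ _) Hn Hu)|].
  rewrite Rmult_assoc. apply Rmult_le_compat_l; [apply pow_le; lra|].
  eapply Rle_trans; [apply step_ratio_2_le|]. rewrite !lorentz_rescale_walk by auto.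
  replace (/ 8 / sqrt (INR n)) with (/ (8 * sqrt (INR n))) by (field; lra). lra.
Qed.

Lemma quad2_le_1_of_box (M : R) : M ^ 2 <= sqrt (INR n) -> Rabs a <= M -> Rabs b <= M -> u <= 1.
Proof.
  intros HMn Ha Hb. destruct (sqrt_INR_facts n Hn). unfold u.
  replace (quad2 _ _) with ((a ^ 2 + b ^ 2) / (4 * sqrt (INR n)))
    by (symmetry; exact (quad2_rescale n t Hn)).
  pose proof (pow_maj_Rabs _ _ 2 Ha). pose proof (pow_maj_Rabs _ _ 2 Hb).
  apply Rle_div_l; unfold a, b in *; lra.
Qed.

Lemma psi_n_2_sub_le_box (M : R) : 2 <= M -> M ^ 2 <= sqrt (INR n) -> Rabs a <= M -> Rabs b <= M ->
  Rabs (psi_n 2 n t - psi 2 t) <= M ^ 6 / sqrt (INR n) * (lorentz (/ M ^ 2) a * lorentz (/ M ^ 2) b).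
Proof.
  intros HM HMn Ha Hb. destruct (sqrt_INR_facts n Hn).
  eapply Rle_trans; [apply (psi_n_2_close n t M); auto|].
  pose proof (lorentz_ge_half M a ltac:(lra) Ha). pose proof (lorentz_ge_half M b ltac:(lra) Hb).
  replace (M ^ 6 / (8 * sqrt (INR n))) with (M ^ 6 / sqrt (INR n) * (1 / 8)) by (field; lra).
  apply Rmult_le_compat_l; [|nra].
  apply Rmult_le_pos; [apply pow_le | left; apply Rinv_0_lt_compat]; lra.
Qed.

End Dimension2Bounds.

Definition error_bound2 (n : nat) (M a b : R) : R :=
  M ^ 6 / sqrt (INR n) * (lorentz (/ M ^ 2) a * lorentz (/ M ^ 2) b)
  + 2 * 73 ^ 2 * (lorentz 1 a * lorentz 1 b * (outer_weight M a + outer_weight M b))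
  + (39 / 40) ^ (n - 1) * exp 2
    * (lorentz (/ (8 * sqrt (INR n))) a * lorentz (/ (8 * sqrt (INR n))) b).

Lemma psi_n_2_sub_le (n : nat) (M : R) (t : nat -> R) : (1 <= n)%nat -> 2 <= M -> M ^ 2 <= sqrt (INR n) ->
  Rabs (psi_n 2 n t - psi 2 t) <= error_bound2 n M (t 0%nat) (t 1%nat).
Proof.
  intros Hn HM HMn. destruct (sqrt_INR_facts n Hn).
  pose proof (step_ratio_pos_le_1 _ _ _ (step_bounds_2 (t 0%nat / walk_scale n) (t 1%nat / walk_scale n))).
  assert (Hk : forall k, 0 < k -> 0 < lorentz k (t 0%nat) * lorentz k (t 1%nat))
    by (intros; apply Rmult_lt_0_compat; apply lorentz_pos; lra).
  pose proof (Hk (/ M ^ 2) ltac:(apply Rinv_0_lt_compat, pow_lt; lra)). pose proof (Hk 1 ltac:(lra)).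
  pose proof (Hk (/ (8 * sqrt (INR n))) ltac:(apply Rinv_0_lt_compat; lra)).
  pose proof (outer_weight_nonneg M (t 0%nat) ltac:(lra)). pose proof (outer_weight_nonneg M (t 1%nat) ltac:(lra)).
  pose proof (pow_le (39 / 40) (n - 1) ltac:(lra)). pose proof (exp_pos 2).
  unfold error_bound2.
  apply (abs_sub_le_three_regions (73 ^ 2 * (lorentz 1 (t 0%nat) * lorentz 1 (t 1%nat))) _ _ _ _ _
           (quad2 (t 0%nat / walk_scale n) (t 1%nat / walk_scale n) <= 1)
           (Rabs (t 0%nat) <= M /\ Rabs (t 1%nat) <= M)).
  - rewrite (psi_n_2_eq n t Hn). apply pow_le. lra.
  - rewrite psi_2_eq. apply Rlt_le, exp_pos.
  - apply psi_2_le_lorentz.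
  - apply Rmult_le_pos; [apply Rmult_le_pos; [apply pow_le | left; apply Rinv_0_lt_compat] | ]; lra.
  - apply Rmult_le_pos; [lra|]. apply Rmult_le_pos; lra.
  - apply Rmult_le_pos; [apply Rmult_le_pos|]; lra.
  - intros _ [Ha Hb]. now apply psi_n_2_sub_le_box.
  - now apply psi_n_2_le_lorentz.
  - intros Hu. apply psi_n_2_le_geometric; auto. lra.
  - intros Hu [Ha Hb]. apply Hu. now apply (quad2_le_1_of_box n t Hn M).
  - intros Hout. pose proof (outer_weight_sum_ge_1 M _ _ ltac:(lra) Hout). nra.
Qed.

Lemma outer_weight_sum3_ge_1 (M a b c : R) : 0 < M -> ~ (Rabs a <= M /\ Rabs b <= M /\ Rabs c <= M) ->
  1 <= outer_weight M a + outer_weight M b + outer_weight M c.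
Proof.
  intros HM H. pose proof (outer_weight_nonneg M c HM).
  destruct (Rle_dec (Rabs c) M).
  - pose proof (outer_weight_sum_ge_1 M a b HM ltac:(tauto)). lra.
  - pose proof (outer_weight_ge_1 M c HM ltac:(lra)).
    pose proof (outer_weight_nonneg M a HM). pose proof (outer_weight_nonneg M b HM). lra.
Qed.

Section Dimension3Bounds.

Variables (n : nat) (t : nat -> R).
Hypothesis Hn : (1 <= n)%nat.
Let a := t 0%nat.
Let b := t 1%nat.
Let c := t 2%nat.
Let u := quad3 (a / walk_scale n) (b / walk_scale n) (c / walk_scale n).

Lemma psi_3_le_pair_lorentz3 : psi 3 t <= 108 ^ 3 * pair_lorentz3 a b c.
Proof.
  rewrite psi_3_eq. eapply Rle_trans; [|apply exp_quart3_le].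
  apply exp_le_exp_of_le. pose proof (quart3_nonneg a b c). unfold a, b, c in *. lra.
Qed.

Lemma psi_n_3_le_pair_lorentz3 : u <= 1 -> psi_n 3 n t <= 108 ^ 3 * pair_lorentz3 a b c.
Proof.
  intros Hu. rewrite (psi_n_3_eq n t Hn).
  eapply Rle_trans; [apply (ratio_pow_le_exp _ _ _ n (step_bounds_3 _ _ _) Hu)|].
  replace (INR n * quart3 (a / walk_scale n) (b / walk_scale n) (c / walk_scale n)) with (quart3 a b c)
    by exact (quart3_rescale n t Hn).
  apply exp_quart3_le.
Qed.

Lemma psi_n_3_le_geometric : 1 <= u ->
  psi_n 3 n t <= (39 / 40) ^ (n - 1) * exp 3
                 * (lorentz (/ (12 * sqrt (INR n))) a * lorentz (/ (12 * sqrt (INR n))) b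
                    * lorentz (/ (12 * sqrt (INR n))) c).
Proof.
  intros Hu. destruct (sqrt_INR_facts n Hn). rewrite (psi_n_3_eq n t Hn).
  eapply Rle_trans; [apply (ratio_pow_tail _ _ _ n (step_bounds_3 _ _ _) Hn Hu)|].
  rewrite Rmult_assoc. apply Rmult_le_compat_l; [apply pow_le; lra|].
  eapply Rle_trans; [apply step_ratio_3_le|]. rewrite !lorentz_rescale_walk by auto.
  replace (/ 12 / sqrt (INR n)) with (/ (12 * sqrt (INR n))) by (field; lra). lra.
Qed.

Lemma quad3_le_1_of_box (M : R) : M ^ 2 <= sqrt (INR n) ->
  Rabs a <= M -> Rabs b <= M -> Rabs c <= M -> u <= 1.
Proof.
  intros HMn Ha Hb Hc. destruct (sqrt_INR_facts n Hn). unfold u.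
  replace (quad3 _ _ _) with ((a ^ 2 + b ^ 2 + c ^ 2) / (6 * sqrt (INR n)))
    by (symmetry; exact (quad3_rescale n t Hn)).
  pose proof (pow_maj_Rabs _ _ 2 Ha). pose proof (pow_maj_Rabs _ _ 2 Hb).
  pose proof (pow_maj_Rabs _ _ 2 Hc).
  apply Rle_div_l; unfold a, b, c in *; lra.
Qed.

Lemma psi_n_3_sub_le_box (M : R) : 2 <= M -> M ^ 2 <= sqrt (INR n) ->
  Rabs a <= M -> Rabs b <= M -> Rabs c <= M ->
  Rabs (psi_n 3 n t - psi 3 t)
  <= M ^ 6 / sqrt (INR n) * (lorentz (/ M ^ 2) a * lorentz (/ M ^ 2) b * lorentz (/ M ^ 2) c).
Proof.
  intros HM HMn Ha Hb Hc. destruct (sqrt_INR_facts n Hn).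
  eapply Rle_trans; [apply (psi_n_3_close n t M); auto|].
  pose proof (lorentz_ge_half M a ltac:(lra) Ha). pose proof (lorentz_ge_half M b ltac:(lra) Hb).
  pose proof (lorentz_ge_half M c ltac:(lra) Hc).
  assert (1 / 4 <= lorentz (/ M ^ 2) a * lorentz (/ M ^ 2) b) by nra.
  replace (M ^ 6 / (8 * sqrt (INR n))) with (M ^ 6 / sqrt (INR n) * (1 / 8)) by (field; lra).
  apply Rmult_le_compat_l; [|nra].
  apply Rmult_le_pos; [apply pow_le | left; apply Rinv_0_lt_compat]; lra.
Qed.

End Dimension3Bounds.

Definition error_bound3 (n : nat) (M a b c : R) : R :=
  M ^ 6 / sqrt (INR n) * (lorentz (/ M ^ 2) a * lorentz (/ M ^ 2) b * lorentz (/ M ^ 2) c)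
  + 2 * 108 ^ 3 * (pair_lorentz3 a b c * (outer_weight M a + outer_weight M b + outer_weight M c))
  + (39 / 40) ^ (n - 1) * exp 3
    * (lorentz (/ (12 * sqrt (INR n))) a * lorentz (/ (12 * sqrt (INR n))) b
       * lorentz (/ (12 * sqrt (INR n))) c).

Lemma psi_n_3_sub_le (n : nat) (M : R) (t : nat -> R) : (1 <= n)%nat -> 2 <= M -> M ^ 2 <= sqrt (INR n) ->
  Rabs (psi_n 3 n t - psi 3 t) <= error_bound3 n M (t 0%nat) (t 1%nat) (t 2%nat).
Proof.
  intros Hn HM HMn. destruct (sqrt_INR_facts n Hn).
  pose proof (step_ratio_pos_le_1 _ _ _ (step_bounds_3 (t 0%nat / walk_scale n) (t 1%nat / walk_scale n)
                                                      (t 2%nat / walk_scale n))).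
  assert (Hk : forall k, 0 < k -> 0 < lorentz k (t 0%nat) * lorentz k (t 1%nat) * lorentz k (t 2%nat))
    by (intros; repeat apply Rmult_lt_0_compat; apply lorentz_pos; lra).
  pose proof (Hk (/ M ^ 2) ltac:(apply Rinv_0_lt_compat, pow_lt; lra)).
  pose proof (Hk (/ (12 * sqrt (INR n))) ltac:(apply Rinv_0_lt_compat; lra)).
  pose proof (pair_lorentz3_pos (t 0%nat) (t 1%nat) (t 2%nat)).
  pose proof (outer_weight_nonneg M (t 0%nat) ltac:(lra)). pose proof (outer_weight_nonneg M (t 1%nat) ltac:(lra)).
  pose proof (outer_weight_nonneg M (t 2%nat) ltac:(lra)).
  pose proof (pow_le (39 / 40) (n - 1) ltac:(lra)). pose proof (exp_pos 3).
  unfold error_bound3.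
  apply (abs_sub_le_three_regions (108 ^ 3 * pair_lorentz3 (t 0%nat) (t 1%nat) (t 2%nat)) _ _ _ _ _
           (quad3 (t 0%nat / walk_scale n) (t 1%nat / walk_scale n) (t 2%nat / walk_scale n) <= 1)
           (Rabs (t 0%nat) <= M /\ Rabs (t 1%nat) <= M /\ Rabs (t 2%nat) <= M)).
  - rewrite (psi_n_3_eq n t Hn). apply pow_le. lra.
  - rewrite psi_3_eq. apply Rlt_le, exp_pos.
  - apply psi_3_le_pair_lorentz3.
  - apply Rmult_le_pos; [apply Rmult_le_pos; [apply pow_le | left; apply Rinv_0_lt_compat] | ]; lra.
  - apply Rmult_le_pos; [lra|]. apply Rmult_le_pos; lra.
  - apply Rmult_le_pos; [apply Rmult_le_pos|]; lra.
  - intros _ (Ha & Hb & Hc). now apply psi_n_3_sub_le_box.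
  - now apply psi_n_3_le_pair_lorentz3.
  - intros Hu. apply psi_n_3_le_geometric; auto. lra.
  - intros Hu (Ha & Hb & Hc). apply Hu. now apply (quad3_le_1_of_box n t Hn M).
  - intros Hout. pose proof (outer_weight_sum3_ge_1 M _ _ _ ltac:(lra) Hout). nra.
Qed.

Lemma continuous2_abs_psi_n_2_sub (n : nat) : (1 <= n)%nat ->
  continuous2 (fun a b => Rabs (psi_n 2 n (vec2 a b) - psi 2 (vec2 a b))).
Proof.
  intros Hn.
  apply (continuous2_ext _ (fun a b => Rabs ((cosh_avg2 (a / walk_scale n) (b / walk_scale n)
           * exp (- quad2 (a / walk_scale n) (b / walk_scale n))) ^ n - exp (- quart2 a b)))).
  { intros a b. rewrite (psi_n_2_eq n _ Hn), psi_2_eq. reflexivity. }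
  unfold cosh_avg2, quad2, quart2. continuity2.
Qed.

Lemma continuous3_abs_psi_n_3_sub (n : nat) : (1 <= n)%nat ->
  continuous3 (fun a b c => Rabs (psi_n 3 n (vec3 a b c) - psi 3 (vec3 a b c))).
Proof.
  intros Hn.
  apply (continuous3_ext _ (fun a b c => Rabs ((cosh_avg3 (a / walk_scale n) (b / walk_scale n) (c / walk_scale n)
           * exp (- quad3 (a / walk_scale n) (b / walk_scale n) (c / walk_scale n))) ^ n
           - exp (- quart3 a b c)))).
  { intros a b c. rewrite (psi_n_3_eq n _ Hn), psi_3_eq. reflexivity. }
  unfold cosh_avg3, quad3, quart3. continuity3.
Qed.

Lemma continuous2_abs_psi_2 : continuous2 (fun a b => Rabs (psi 2 (vec2 a b))).
Proof.
  apply (continuous2_ext _ (fun a b => Rabs (exp (- quart2 a b)))); [intros; now rewrite psi_2_eq|].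
  unfold quart2. continuity2.
Qed.

Lemma continuous3_abs_psi_3 : continuous3 (fun a b c => Rabs (psi 3 (vec3 a b c))).
Proof.
  apply (continuous3_ext _ (fun a b c => Rabs (exp (- quart3 a b c)))); [intros; now rewrite psi_3_eq|].
  unfold quart3. continuity3.
Qed.

Lemma int2_lorentz_outer_weight_le (M r : R) : 0 < M -> 0 <= r ->
  int2 (fun a b => lorentz 1 a * lorentz 1 b * (outer_weight M a + outer_weight M b)) r <= 4 * PI ^ 2 / M.
Proof.
  intros HM Hr. pose proof (continuous_lorentz 1 ltac:(lra)) as HL.
  pose proof (continuous_outer_weight M HM) as HW.
  assert (HWL : forall x, continuous (fun c => outer_weight M c * lorentz 1 c) x)
    by (intros; apply (continuous_mult (outer_weight M) (lorentz 1)); auto).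
  rewrite (int2_ext _ (fun a b => (outer_weight M a * lorentz 1 a) * lorentz 1 b
                                   + lorentz 1 a * (outer_weight M b * lorentz 1 b))) by (intros; ring).
  rewrite int2_plus by continuity2.
  rewrite (int2_prod r (fun a => outer_weight M a * lorentz 1 a) (lorentz 1)) by auto.
  rewrite (int2_prod r (lorentz 1) (fun b => outer_weight M b * lorentz 1 b)) by auto.
  pose proof (RInt_outer_weight_lorentz_le M r HM Hr).
  pose proof (RInt_lorentz_le 1 r ltac:(lra) Hr). rewrite sqrt_1 in H0.
  pose proof (RInt_lorentz_nonneg 1 r ltac:(lra) Hr).
  assert (0 <= RInt (fun c => outer_weight M c * lorentz 1 c) (- r) r).
  { apply RInt_ge_0; [lra | apply ex_RInt_of_continuous; auto|].
    intros x _. apply Rmult_le_pos; [apply outer_weight_nonneg; auto | left; apply lorentz_pos; lra]. }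
  replace (4 * PI ^ 2 / M) with ((2 * PI / M) * (PI / 1) + (PI / 1) * (2 * PI / M)) by (field; lra).
  apply Rplus_le_compat; apply Rmult_le_compat; auto.
Qed.

Lemma sqrt_INR_le (n : nat) : (1 <= n)%nat -> sqrt (INR n) <= INR n.
Proof. intros Hn. destruct (sqrt_INR_facts n Hn) as [H1 H2]. nra. Qed.

Lemma int2_error_bound2_le (n : nat) (M r : R) : (1 <= n)%nat -> 2 <= M -> 0 <= r ->
  int2 (error_bound2 n M) r <= M ^ 8 * PI ^ 2 / sqrt (INR n) + 8 * 73 ^ 2 * PI ^ 2 / M
                       + 8 * PI ^ 2 * exp 2 * (INR n * (39 / 40) ^ (n - 1)).
Proof.
  intros Hn HM Hr. destruct (sqrt_INR_facts n Hn) as [Hsq _]. pose proof (sqrt_INR_le n Hn).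
  pose proof (pow_lt M 2 ltac:(lra)). pose proof PI_RGT_0. pose proof (exp_pos 2).
  pose proof (pow_le (39 / 40) (n - 1) ltac:(lra)).
  set (k1 := / M ^ 2). set (k3 := / (8 * sqrt (INR n))).
  assert (Hk1 : 0 < k1) by (apply Rinv_0_lt_compat; lra).
  assert (Hk3 : 0 < k3) by (apply Rinv_0_lt_compat; lra).
  pose proof (continuous_lorentz k1 ltac:(lra)). pose proof (continuous_lorentz k3 ltac:(lra)).
  pose proof (continuous_lorentz 1 ltac:(lra)). pose proof (continuous_outer_weight M ltac:(lra)).
  unfold error_bound2. fold k1 k3.
  rewrite int2_plus, int2_plus, !int2_scal by continuity2.
  pose proof (int2_lorentz_le k1 r Hk1 Hr). pose proof (int2_lorentz_le k3 r Hk3 Hr).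
  pose proof (int2_lorentz_outer_weight_le M r ltac:(lra) Hr).
  assert (E1 : M ^ 6 / sqrt (INR n) * (PI ^ 2 / k1) = M ^ 8 * PI ^ 2 / sqrt (INR n))
    by (unfold k1; field; lra).
  assert (E3 : PI ^ 2 / k3 = 8 * PI ^ 2 * sqrt (INR n)) by (unfold k3; field; lra).
  apply Rplus_le_compat; [apply Rplus_le_compat|].
  - rewrite <- E1. apply Rmult_le_compat_l; [|auto].
    apply Rmult_le_pos; [apply pow_le | left; apply Rinv_0_lt_compat]; lra.
  - replace (8 * 73 ^ 2 * PI ^ 2 / M) with (2 * 73 ^ 2 * (4 * PI ^ 2 / M)) by (field; lra).
    apply Rmult_le_compat_l; [lra | auto].
  - rewrite E3 in *. apply (Rle_trans _ ((39 / 40) ^ (n - 1) * exp 2 * (8 * PI ^ 2 * sqrt (INR n)))).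
    + apply Rmult_le_compat_l; [apply Rmult_le_pos|]; lra.
    + assert (0 <= 8 * PI ^ 2 * exp 2 * (39 / 40) ^ (n - 1)) by (apply Rmult_le_pos; [|lra]; nra).
      nra.
Qed.

Lemma int3_error_bound3_le (n : nat) (M r : R) : (1 <= n)%nat -> 2 <= M -> 0 <= r ->
  int3 (error_bound3 n M) r <= M ^ 10 * PI ^ 3 / sqrt (INR n) + 2 * 108 ^ 3 * (72 * PI ^ 3) / M
                       + 144 * PI ^ 3 * exp 3 * (INR n * (39 / 40) ^ (n - 1)).
Proof.
  intros Hn HM Hr. destruct (sqrt_INR_facts n Hn) as [Hsq Hsq2].
  pose proof (pow_lt M 2 ltac:(lra)). pose proof PI_RGT_0. pose proof (exp_pos 3).
  pose proof (pow_le (39 / 40) (n - 1) ltac:(lra)).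
  set (k1 := / M ^ 2). set (k3 := / (12 * sqrt (INR n))).
  assert (Hk1 : 0 < k1 <= 1).
  { split; [apply Rinv_0_lt_compat; lra|]. unfold k1. rewrite <- Rinv_1. apply Rinv_le_contravar; nra. }
  assert (Hk3 : 0 < k3 <= 1).
  { split; [apply Rinv_0_lt_compat; lra|]. unfold k3. rewrite <- Rinv_1. apply Rinv_le_contravar; lra. }
  pose proof (continuous_lorentz k1 ltac:(lra)). pose proof (continuous_lorentz k3 ltac:(lra)).
  pose proof (continuous_lorentz 1 ltac:(lra)). pose proof (continuous_outer_weight M ltac:(lra)).
  unfold error_bound3, pair_lorentz3. fold k1 k3.
  rewrite int3_plus, int3_plus, !int3_scal by continuity3.
  pose proof (int3_lorentz_le k1 r Hk1 Hr). pose proof (int3_lorentz_le k3 r Hk3 Hr).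
  pose proof (int3_pair_lorentz3_weighted_le (outer_weight M) (fun x => outer_weight_nonneg M x ltac:(lra))
                (fun x y => outer_weight_mono M x y ltac:(lra)) (continuous_outer_weight M ltac:(lra)) r Hr).
  pose proof (RInt_outer_weight_lorentz_le M r ltac:(lra) Hr). unfold pair_lorentz3 in *.
  assert (E1 : M ^ 6 / sqrt (INR n) * (PI ^ 3 / k1 ^ 2) = M ^ 10 * PI ^ 3 / sqrt (INR n))
    by (unfold k1; field; lra).
  assert (E3 : PI ^ 3 / k3 ^ 2 = 144 * PI ^ 3 * INR n) by (unfold k3; set (sq := sqrt (INR n)) in *; rewrite <- Hsq2; field; lra).
  apply Rplus_le_compat; [apply Rplus_le_compat|].
  - rewrite <- E1. apply Rmult_le_compat_l; [|auto].
    apply Rmult_le_pos; [apply pow_le | left; apply Rinv_0_lt_compat]; lra.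
  - replace (2 * 108 ^ 3 * (72 * PI ^ 3) / M) with (2 * 108 ^ 3 * (36 * PI ^ 2 * (2 * PI / M)))
      by (field; lra).
    apply Rmult_le_compat_l; [lra|]. eapply Rle_trans; [eassumption|].
    apply Rmult_le_compat_l; [nra | auto].
  - rewrite E3 in *. apply (Rle_trans _ ((39 / 40) ^ (n - 1) * exp 3 * (144 * PI ^ 3 * INR n))).
    + apply Rmult_le_compat_l; [apply Rmult_le_pos|]; lra.
    + right. ring.
Qed.

Lemma pow_ge_binomial2 (h : R) (m : nat) : 0 <= h ->
  1 + INR m * h + INR m * (INR m - 1) / 2 * h ^ 2 <= (1 + h) ^ m.
Proof.
  intros Hh. induction m as [|m IH]; [simpl; lra|].
  rewrite S_INR. simpl pow. pose proof (pos_INR m).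
  assert (0 <= INR m * (INR m - 1) / 2 * h ^ 3).
  { destruct m as [|m]; [simpl; lra|].
    rewrite S_INR. pose proof (pos_INR m). pose proof (pow_le h 3 Hh).
    apply Rmult_le_pos; [apply Rmult_le_pos|]; nra. }
  assert ((1 + h) * (1 + INR m * h + INR m * (INR m - 1) / 2 * h ^ 2) <= (1 + h) * (1 + h) ^ m)
    by (apply Rmult_le_compat_l; lra).
  assert ((1 + h) * (1 + INR m * h + INR m * (INR m - 1) / 2 * h ^ 2)
          = 1 + (INR m + 1) * h + (INR m + 1) * (INR m + 1 - 1) / 2 * h ^ 2
            + INR m * (INR m - 1) / 2 * h ^ 3) by (simpl; field).
  lra.
Qed.

(* [(40/39)^m >= m^2 / (2 * 39^2)], so [n (39/40)^(n-1) = O(1/n)]. *)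
Lemma mul_geometric_le (n : nat) : (2 <= n)%nat -> INR n * (39 / 40) ^ (n - 1) <= 6084 / (INR n - 1).
Proof.
  intros Hn. set (m := (n - 1)%nat).
  assert (Hm : INR m = INR n - 1) by (unfold m; rewrite minus_INR by lia; simpl; ring).
  assert (Hm1 : 1 <= INR m) by (unfold m; apply (le_INR 1); lia).
  rewrite <- Hm. replace (INR n) with (INR m + 1) by lra.
  set (h := 1 / 39). pose proof (pow_ge_binomial2 h m ltac:(unfold h; lra)).
  assert (Heq : (39 / 40) ^ m * (1 + h) ^ m = 1)
    by (rewrite <- Rpow_mult_distr; unfold h; replace (39 / 40 * (1 + 1 / 39)) with 1 by field; apply pow1).
  assert (Hpos : 0 < (39 / 40) ^ m) by (apply pow_lt; lra).
  assert (HP : (39 / 40) ^ m <= 2 / (INR m ^ 2 * h ^ 2)).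
  { apply (Rmult_le_reg_r (INR m ^ 2 * h ^ 2 / 2)); [unfold h; nra|].
    replace (2 / (INR m ^ 2 * h ^ 2) * (INR m ^ 2 * h ^ 2 / 2)) with 1 by (field; unfold h; nra).
    unfold h in *. nra. }
  apply (Rle_trans _ ((INR m + 1) * (2 / (INR m ^ 2 * h ^ 2)))); [apply Rmult_le_compat_l; lra|].
  unfold h. apply (Rmult_le_reg_r (INR m)); [lra|].
  replace (6084 / INR m * INR m) with 6084 by (field; lra).
  replace ((INR m + 1) * (2 / (INR m ^ 2 * (1 / 39) ^ 2)) * INR m) with (3042 * (1 + 1 / INR m))
    by (field; lra).
  assert (1 / INR m <= 1)
    by (apply (Rmult_le_reg_r (INR m)); [lra|]; replace (1 / INR m * INR m) with 1 by (field; lra); lra).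
  lra.
Qed.

Lemma exists_sqrt_INR_gt (A : R) : exists N : nat, forall n, (N <= n)%nat -> (1 <= n)%nat /\ A < sqrt (INR n).
Proof.
  destruct (INR_unbounded (A ^ 2 + Rabs A + 1)) as [N HN]. exists N. intros n Hn.
  pose proof (le_INR _ _ Hn). pose proof (pow2_ge_0 A). pose proof (Rabs_pos A).
  pose proof (Rle_abs A). assert (1 <= INR n) by lra.
  split; [apply INR_le; simpl; lra|].
  destruct (Rle_dec A 0); [pose proof (sqrt_lt_R0 (INR n) ltac:(lra)); lra|].
  rewrite <- (sqrt_pow2 A) by lra. apply sqrt_lt_1_alt. split; [apply pow2_ge_0 | nra].
Qed.

Lemma error_budget (a : R -> R) (K C eps : R) : 0 <= K -> 0 <= C -> 0 < eps ->
  exists M N, 2 <= M /\ forall n, (N <= n)%nat ->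
    (1 <= n)%nat /\ M ^ 2 <= sqrt (INR n) /\
    a M / sqrt (INR n) + K / M + C * (INR n * (39 / 40) ^ (n - 1)) <= eps.
Proof.
  intros HK HC Heps. set (M := 2 + 3 * K / eps).
  assert (HM : 2 <= M) by (unfold M; pose proof (Rdiv_le_0_compat (3 * K) eps ltac:(lra) Heps); lra).
  destruct (exists_sqrt_INR_gt (M ^ 2 + 3 * Rabs (a M) / eps + 3 * 6084 * C / eps + 1)) as [N HN].
  exists M, N. split; [exact HM|]. intros n Hn. destruct (HN n Hn) as [Hn1 Hsq].
  pose proof (sqrt_INR_le n Hn1). pose proof (Rabs_pos (a M)).
  assert (0 <= 3 * Rabs (a M) / eps) by (apply Rdiv_le_0_compat; lra).
  assert (0 <= 3 * 6084 * C / eps) by (apply Rdiv_le_0_compat; lra).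
  assert (0 <= M ^ 2) by apply pow2_ge_0.
  split; [exact Hn1 | split; [lra|]].
  assert (B1 : a M / sqrt (INR n) <= eps / 3).
  { apply (Rle_trans _ (Rabs (a M) / sqrt (INR n))).
    - apply Rmult_le_compat_r; [left; apply Rinv_0_lt_compat; lra | apply Rle_abs].
    - apply Rle_div_l; [lra|]. apply (Rmult_le_reg_l (3 / eps)); [apply Rdiv_lt_0_compat; lra|].
      replace (3 / eps * (eps / 3 * sqrt (INR n))) with (sqrt (INR n)) by (field; lra).
      replace (3 / eps * Rabs (a M)) with (3 * Rabs (a M) / eps) by (field; lra). lra. }
  assert (B2 : K / M <= eps / 3).
  { apply Rle_div_l; [lra|]. unfold M. replace (eps / 3 * (2 + 3 * K / eps)) with (2 * eps / 3 + K)
      by (field; lra). lra. }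
  assert (B3 : C * (INR n * (39 / 40) ^ (n - 1)) <= eps / 3).
  { assert (Hn2 : (2 <= n)%nat) by (apply INR_lt; simpl; lra).
    pose proof (mul_geometric_le n Hn2).
    apply (Rle_trans _ (C * (6084 / (INR n - 1)))); [apply Rmult_le_compat_l; lra|].
    replace (C * (6084 / (INR n - 1))) with (6084 * C / (INR n - 1)) by (field; lra).
    apply Rle_div_l; [lra|]. apply (Rmult_le_reg_l (3 / eps)); [apply Rdiv_lt_0_compat; lra|].
    replace (3 / eps * (eps / 3 * (INR n - 1))) with (INR n - 1) by (field; lra).
    replace (3 / eps * (6084 * C)) with (3 * 6084 * C / eps) by (field; lra). lra. }
  lra.
Qed.

Lemma sixth_power_over_sqrt_lt (r eps s : R) : 0 < eps -> r ^ 6 / (8 * eps) < s -> r ^ 6 / (8 * s) < eps.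
Proof.
  intros Heps H. pose proof (pow2_ge_0 (r ^ 3)). replace ((r ^ 3) ^ 2) with (r ^ 6) in H0 by ring.
  assert (0 <= r ^ 6 / (8 * eps)) by (apply Rdiv_le_0_compat; lra).
  apply (Rmult_lt_reg_r (8 * s)); [lra|].
  replace (r ^ 6 / (8 * s) * (8 * s)) with (r ^ 6) by (field; lra).
  replace (r ^ 6) with (r ^ 6 / (8 * eps) * (8 * eps)) by (field; lra). nra.
Qed.

Lemma psi_n_2_locally_uniform (r eps : R) : 0 < eps ->
  exists N : nat, forall n : nat, (N <= n)%nat -> forall t : nat -> R,
    (forall i, (i < 2)%nat -> Rabs (t i) <= r) -> Rabs (psi_n 2 n t - psi 2 t) < eps.
Proof.
  intros Heps. destruct (exists_sqrt_INR_gt (r ^ 2 + r ^ 6 / (8 * eps))) as [N HN].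
  exists N. intros n Hn t Ht. destruct (HN n Hn) as [Hn1 Hs].
  assert (0 <= r ^ 6 / (8 * eps)) by (apply Rdiv_le_0_compat; [pose proof (pow2_ge_0 (r ^ 3)); nra | lra]).
  eapply Rle_lt_trans; [apply (psi_n_2_close n t r); auto; lra|].
  apply sixth_power_over_sqrt_lt; [lra|]. pose proof (pow2_ge_0 r). lra.
Qed.

Lemma psi_n_3_locally_uniform (r eps : R) : 0 < eps ->
  exists N : nat, forall n : nat, (N <= n)%nat -> forall t : nat -> R,
    (forall i, (i < 3)%nat -> Rabs (t i) <= r) -> Rabs (psi_n 3 n t - psi 3 t) < eps.
Proof.
  intros Heps. destruct (exists_sqrt_INR_gt (r ^ 2 + r ^ 6 / (8 * eps))) as [N HN].
  exists N. intros n Hn t Ht. destruct (HN n Hn) as [Hn1 Hs].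
  assert (0 <= r ^ 6 / (8 * eps)) by (apply Rdiv_le_0_compat; [pose proof (pow2_ge_0 (r ^ 3)); nra | lra]).
  eapply Rle_lt_trans; [apply (psi_n_3_close n t r); auto; lra|].
  apply sixth_power_over_sqrt_lt; [lra|]. pose proof (pow2_ge_0 r). lra.
Qed.

Lemma psi_2_L1 : L1_le 2 (psi 2) (73 ^ 2 * PI ^ 2).
Proof.
  pose proof (continuous_lorentz 1 ltac:(lra)).
  split.
  - intros r Hr. eexists. apply box_int_2_exists, continuous2_abs_psi_2.
  - intros r l Hr Hl. rewrite (box_int_unique _ _ _ _ Hl), box_value_2.
    apply (Rle_trans _ (int2 (fun a b => 73 ^ 2 * (lorentz 1 a * lorentz 1 b)) r)).
    + apply int2_le; [exact Hr | apply continuous2_abs_psi_2 | continuity2 |].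
      intros a b _ _. rewrite psi_2_eq, Rabs_pos_eq by apply Rlt_le, exp_pos.
      change (vec2 a b 0%nat) with a. change (vec2 a b 1%nat) with b.
      eapply Rle_trans; [|apply exp_quart2_le]. apply exp_le_exp_of_le.
      pose proof (quart2_nonneg a b). lra.
    + rewrite int2_scal by continuity2.
      replace (73 ^ 2 * PI ^ 2) with (73 ^ 2 * (PI ^ 2 / 1)) by field.
      apply Rmult_le_compat_l; [lra | apply int2_lorentz_le; lra].
Qed.

Lemma psi_3_L1 : L1_le 3 (psi 3) (108 ^ 3 * 12 * PI ^ 3).
Proof.
  pose proof (continuous_lorentz 1 ltac:(lra)).
  assert (Hone : forall x : R, continuous (fun _ : R => 1) x) by (intros; apply continuous_const).
  split.
  - intros r Hr. eexists. apply box_int_3_exists, continuous3_abs_psi_3.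
  - intros r l Hr Hl. rewrite (box_int_unique _ _ _ _ Hl), box_value_3.
    apply (Rle_trans _ (int3 (fun a b c => 108 ^ 3 / 3 * (pair_lorentz3 a b c * (1 + 1 + 1))) r)).
    + apply int3_le; [exact Hr | apply continuous3_abs_psi_3 | unfold pair_lorentz3; continuity3 |].
      intros a b c _ _ _. rewrite psi_3_eq, Rabs_pos_eq by apply Rlt_le, exp_pos.
      change (vec3 a b c 0%nat) with a. change (vec3 a b c 1%nat) with b.
      change (vec3 a b c 2%nat) with c.
      eapply Rle_trans; [apply exp_le_exp_of_le with (y := - quart3 a b c / 3)|].
      * pose proof (quart3_nonneg a b c). lra.
      * eapply Rle_trans; [apply exp_quart3_le | right; field].
    + rewrite int3_scal by (unfold pair_lorentz3; continuity3).
      pose proof (int3_pair_lorentz3_weighted_le (fun _ => 1) ltac:(intros; lra) ltac:(intros; lra) Hone r Hr).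
      rewrite (RInt_extR _ (lorentz 1)) in H0 by (intros; ring).
      pose proof (RInt_lorentz_le 1 r ltac:(lra) Hr). rewrite sqrt_1 in H1. pose proof PI_RGT_0.
      assert (36 * PI ^ 2 * RInt (lorentz 1) (- r) r <= 36 * PI ^ 2 * (PI / 1))
        by (apply Rmult_le_compat_l; [nra | exact H1]).
      replace (108 ^ 3 * 12 * PI ^ 3) with (108 ^ 3 / 3 * (36 * PI ^ 2 * (PI / 1))) by field.
      apply Rmult_le_compat_l; lra.
Qed.

Lemma continuous2_error_bound2 (n : nat) (M : R) : (1 <= n)%nat -> 0 < M -> continuous2 (error_bound2 n M).
Proof.
  intros Hn HM. destruct (sqrt_INR_facts n Hn).
  pose proof (continuous_lorentz (/ M ^ 2) ltac:(apply Rlt_le, Rinv_0_lt_compat, pow_lt; lra)).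
  pose proof (continuous_lorentz (/ (8 * sqrt (INR n))) ltac:(apply Rlt_le, Rinv_0_lt_compat; lra)).
  pose proof (continuous_lorentz 1 ltac:(lra)). pose proof (continuous_outer_weight M HM).
  unfold error_bound2. continuity2.
Qed.

Lemma psi_n_2_L1 (eps : R) : 0 < eps ->
  exists N : nat, forall n : nat, (N <= n)%nat -> L1_le 2 (fun t => psi_n 2 n t - psi 2 t) eps.
Proof.
  intros Heps. pose proof PI_RGT_0. pose proof (exp_pos 2).
  destruct (error_budget (fun M => M ^ 8 * PI ^ 2) (8 * 73 ^ 2 * PI ^ 2) (8 * PI ^ 2 * exp 2) eps)
    as (M & N & HM & HN); [nra | nra | exact Heps|].
  exists N. intros n Hn. destruct (HN n Hn) as (Hn1 & HMn & Hbudget). split.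
  - intros r Hr. eexists. apply box_int_2_exists, continuous2_abs_psi_n_2_sub, Hn1.
  - intros r l Hr Hl. rewrite (box_int_unique _ _ _ _ Hl), box_value_2.
    eapply Rle_trans; [apply (int2_le r Hr _ (error_bound2 n M))|].
    + apply continuous2_abs_psi_n_2_sub, Hn1.
    + apply continuous2_error_bound2; [exact Hn1 | lra].
    + intros a b _ _. exact (psi_n_2_sub_le n M (vec2 a b) Hn1 HM HMn).
    + eapply Rle_trans; [apply int2_error_bound2_le; auto|]. unfold Rdiv in *. lra.
Qed.

Lemma continuous3_error_bound3 (n : nat) (M : R) : (1 <= n)%nat -> 0 < M -> continuous3 (error_bound3 n M).
Proof.
  intros Hn HM. destruct (sqrt_INR_facts n Hn).
  pose proof (continuous_lorentz (/ M ^ 2) ltac:(apply Rlt_le, Rinv_0_lt_compat, pow_lt; lra)).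
  pose proof (continuous_lorentz (/ (12 * sqrt (INR n))) ltac:(apply Rlt_le, Rinv_0_lt_compat; lra)).
  pose proof (continuous_lorentz 1 ltac:(lra)). pose proof (continuous_outer_weight M HM).
  unfold error_bound3, pair_lorentz3. continuity3.
Qed.

Lemma psi_n_3_L1 (eps : R) : 0 < eps ->
  exists N : nat, forall n : nat, (N <= n)%nat -> L1_le 3 (fun t => psi_n 3 n t - psi 3 t) eps.
Proof.
  intros Heps. pose proof (pow_lt PI 3 PI_RGT_0). pose proof (exp_pos 3).
  destruct (error_budget (fun M => M ^ 10 * PI ^ 3) (2 * 108 ^ 3 * (72 * PI ^ 3))
              (144 * PI ^ 3 * exp 3) eps) as (M & N & HM & HN); [nra | nra | exact Heps|].
  exists N. intros n Hn. destruct (HN n Hn) as (Hn1 & HMn & Hbudget). split.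
  - intros r Hr. eexists. apply box_int_3_exists, continuous3_abs_psi_n_3_sub, Hn1.
  - intros r l Hr Hl. rewrite (box_int_unique _ _ _ _ Hl), box_value_3.
    eapply Rle_trans; [apply (int3_le r Hr _ (error_bound3 n M))|].
    + apply continuous3_abs_psi_n_3_sub, Hn1.
    + apply continuous3_error_bound3; [exact Hn1 | lra].
    + intros a b c _ _ _. exact (psi_n_3_sub_le n M (vec3 a b c) Hn1 HM HMn).
    + eapply Rle_trans; [apply int3_error_bound3_le; auto|]. unfold Rdiv in *. lra.
Qed.

Theorem mainTheorem7 (d : nat) (hd : d = 2%nat \/ d = 3%nat) :
  (* locally uniform convergence *)
  (forall r eps, 0 < r -> 0 < eps ->
     exists N : nat, forall n : nat, (N <= n)%nat ->
       forall t : nat -> R, (forall i, (i < d)%nat -> Rabs (t i) <= r) ->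
         Rabs (psi_n d n t - psi d t) < eps) /\
  (* convergence in L^1(R^d) *)
  (forall eps, 0 < eps ->
     exists N : nat, forall n : nat, (N <= n)%nat ->
       L1_le d (fun t => psi_n d n t - psi d t) eps) /\
  (* psi is in L^1(R^d) *)
  (exists c, L1_le d (psi d) c).
Proof.
  destruct hd as [-> | ->]; (split; [|split]).
  - intros r eps _ Heps. exact (psi_n_2_locally_uniform r eps Heps).
  - exact psi_n_2_L1.
  - exact (ex_intro _ _ psi_2_L1).
  - intros r eps _ Heps. exact (psi_n_3_locally_uniform r eps Heps).
  - exact psi_n_3_L1.
  - exact (ex_intro _ _ psi_3_L1).
Qed.
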